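(* Let $h\ge0$. The minimal helicoidal surfaces of pitch $h$ in $\mathbb{S}^3$ whose profile curve has non-constant $z$-coordinate are described by the one-parameter family $\mathrm{Hel}^h_c:=X^h(\xi^h_c)$, $0\le c<1/2$, uniquely determined, up to translations along $c_0$, by the spherical angular momenta $$\mathcal K^h_c(z)=-\frac{c\sqrt{h^2+(1-h^2)z^2}}{\sqrt{z^4+h^2c^2}},\qquad 0\le c<1/2,$$ of their profile curves $\xi^h_c$.
   Context: Identify $\mathbb{S}^3$ with the unit sphere of $\mathbb{R}^4$ and let $c_0=\{(x_1,x_2,0,0)\in\mathbb{S}^3\}$. For $h\ge0$ and a regular arc-length parametrized curve $\xi(s)=(x(s),y(s),z(s))$ in $\{(x,y,z)\in\mathbb{S}^2:z>0\}$, the helicoidal surface with pitch $h$ and profile curve $\xi$ is $X^h(\xi)(s,t)=(x\cos ht-y\sin ht,\ x\sin ht+y\cos ht,\ z\cos t,\ z\sin t)$; translations along $c_0$ are the rotations of the $(x_1,x_2)$-plane. The spherical angular momentum of $\xi$ is $\mathcal K=\dot x\,y-x\,\dot y$ (dot = arc-length derivative), regarded as a function of $z$; the sign of $\mathcal K$ depends on orientation. *)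

From Stdlib Require Import Reals.
From Coquelicot Require Import Coquelicot.
Open Scope R_scope.

Record R4 := mkR4 { r4_1 : R; r4_2 : R; r4_3 : R; r4_4 : R }.

Definition r4_comp (i : nat) (v : R4) : R :=
  match i with 0%nat => r4_1 v | 1%nat => r4_2 v | 2%nat => r4_3 v | _ => r4_4 v end.

Definition r4_add (u v : R4) : R4 :=
  mkR4 (r4_1 u + r4_1 v) (r4_2 u + r4_2 v) (r4_3 u + r4_3 v) (r4_4 u + r4_4 v).
Definition r4_scal (a : R) (v : R4) : R4 :=
  mkR4 (a * r4_1 v) (a * r4_2 v) (a * r4_3 v) (a * r4_4 v).
Definition r4_dot (u v : R4) : R :=
  r4_1 u * r4_1 v + r4_2 u * r4_2 v + r4_3 u * r4_3 v + r4_4 u * r4_4 v.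

Definition pd1 (X : R -> R -> R4) : R -> R -> R4 := fun s t =>
  mkR4 (Derive (fun u => r4_1 (X u t)) s) (Derive (fun u => r4_2 (X u t)) s)
       (Derive (fun u => r4_3 (X u t)) s) (Derive (fun u => r4_4 (X u t)) s).
Definition pd2 (X : R -> R -> R4) : R -> R -> R4 := fun s t =>
  mkR4 (Derive (fun u => r4_1 (X s u)) t) (Derive (fun u => r4_2 (X s u)) t)
       (Derive (fun u => r4_3 (X s u)) t) (Derive (fun u => r4_4 (X s u)) t).

Definition ex_partials (X : R -> R -> R4) (s t : R) : Prop :=
  forall i : nat, (i < 4)%nat ->
    ex_derive (fun u => r4_comp i (X u t)) s /\ ex_derive (fun u => r4_comp i (X s u)) t.

(** X is twice differentiable, lies in S^3, is an immersion (Gram determinant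
    EG - F^2 > 0), and its mean curvature in S^3 vanishes.  The latter is
    expressed as: the vector G X_ss - 2F X_st + E X_tt (= 2(EG-F^2) times the
    mean curvature vector of X in R^4, up to tangential terms) lies in
    span{X_s, X_t, X}, i.e. its component normal to the surface inside
    T S^3 is zero. *)
Definition minimal_in_S3 (U : R -> R -> Prop) (X : R -> R -> R4) : Prop :=
  forall s t, U s t ->
    let Xs := pd1 X s t in
    let Xt := pd2 X s t in
    let Xss := pd1 (pd1 X) s t in
    let Xst := pd2 (pd1 X) s t in
    let Xtt := pd2 (pd2 X) s t in
    let E := r4_dot Xs Xs in
    let F := r4_dot Xs Xt in
    let G := r4_dot Xt Xt in
    r4_dot (X s t) (X s t) = 1 /\
    ex_partials X s t /\ ex_partials (pd1 X) s t /\ ex_partials (pd2 X) s t /\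
    E * G - F ^ 2 > 0 /\
    exists a b c : R,
      r4_add (r4_add (r4_scal G Xss) (r4_scal (- (2 * F)) Xst)) (r4_scal E Xtt)
      = r4_add (r4_add (r4_scal a Xs) (r4_scal b Xt)) (r4_scal c (X s t)).

Definition in_I (a b : Rbar) (s : R) : Prop := Rbar_lt a s /\ Rbar_lt s b.

Definition profile_curve (a b : Rbar) (x y z : R -> R) : Prop :=
  Rbar_lt a b /\
  forall s, in_I a b s ->
    (forall n : nat, ex_derive_n x n s /\ ex_derive_n y n s /\ ex_derive_n z n s) /\
    x s ^ 2 + y s ^ 2 + z s ^ 2 = 1 /\
    0 < z s /\
    (Derive x s) ^ 2 + (Derive y s) ^ 2 + (Derive z s) ^ 2 = 1.

Definition z_nonconstant (a b : Rbar) (z : R -> R) : Prop :=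
  exists s1 s2, in_I a b s1 /\ in_I a b s2 /\ z s1 <> z s2.

Definition helicoidal (h : R) (x y z : R -> R) : R -> R -> R4 := fun s t =>
  mkR4 (x s * cos (h * t) - y s * sin (h * t))
       (x s * sin (h * t) + y s * cos (h * t))
       (z s * cos t) (z s * sin t).

Definition strip (a b : Rbar) : R -> R -> Prop := fun s _ => in_I a b s.

Definition ang_mom (x y : R -> R) (s : R) : R := Derive x s * y s - x s * Derive y s.

Definition Khc (h c w : R) : R :=
  - (c * sqrt (h ^ 2 + (1 - h ^ 2) * w ^ 2)) / sqrt (w ^ 4 + h ^ 2 * c ^ 2).

(* Rotating by the helicoidal motions reduces minimality of X^h(xi) to an ODE
   along the profile curve,
     z (h^2 (1 - z^2) + z^2) kappa + K (z^2 (1 + h^2) + 2 h^2 z'^2) = 0,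
   where kappa is the geodesic curvature of xi in S^2 and K' = kappa z'.
   This ODE has the first integral K z^2 / sqrt (h^2 z'^2 + z^2) = +/- c, which
   together with z'^2 + K^2 = 1 - z^2 yields K = +/- K^h_c(z) and the speed law
   z'^2 (z^4 + h^2 c^2) = - z^2 (z^4 - z^2 + c^2); the latter forces c < 1/2 when
   z is not constant.  Conversely K = +/- K^h_c(z) gives the speed law, whose
   derivative is the minimality equation wherever z' <> 0, and a connectedness
   argument shows that the speed law residual cannot be nonzero anywhere.
   The curve is built by inverting s = int dz / sqrt (1 - z^2 - K^2) and taking
   the polar angle theta = int - K / ((1 - z^2) z') dz.  It is unique since z solves
   the Lipschitz ODE z'' = Phi(z) (Gronwall), while x + i y solves a linear ODE
   determined by z and K; for c = 0 the profile is a great circle. *)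

From Stdlib Require Import Reals Lra Lia Psatz Classical ClassicalEpsilon.
From Coquelicot Require Import Coquelicot.
Open Scope R_scope.

(** * Calculus on an open interval *)

Lemma open_in_I (a b : Rbar) : open (in_I a b).
Proof. apply open_and; [apply open_Rbar_gt | apply open_Rbar_lt]. Qed.

Lemma locally_in_I (a b : Rbar) s : in_I a b s -> locally s (in_I a b).
Proof. intros Hs. apply (locally_open _ _ (open_in_I a b)); auto. Qed.

Lemma in_I_between (a b : Rbar) s1 s2 u :
  in_I a b s1 -> in_I a b s2 -> s1 <= u <= s2 -> in_I a b u.
Proof.
  intros [H1 H2] [H3 H4] [H5 H6]; split.
  - destruct a as [a| |]; simpl in *; auto; lra.
  - destruct b as [b| |]; simpl in *; auto; lra.
Qed.

Lemma in_I_between_min_max (a b : Rbar) s1 s2 u :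
  in_I a b s1 -> in_I a b s2 -> Rmin s1 s2 <= u <= Rmax s1 s2 -> in_I a b u.
Proof.
  intros H1 H2 Hu. apply (in_I_between a b (Rmin s1 s2) (Rmax s1 s2)); auto.
  - unfold Rmin; destruct Rle_dec; auto.
  - unfold Rmax; destruct Rle_dec; auto.
Qed.

Lemma const_of_derive_0 (a b : Rbar) (f : R -> R) :
  (forall s, in_I a b s -> is_derive f s 0) ->
  forall s1 s2, in_I a b s1 -> in_I a b s2 -> f s1 = f s2.
Proof.
  intros Hd s1 s2 H1 H2.
  destruct (MVT_gen f s1 s2 (fun _ => 0)) as [c [_ Hc]].
  - intros u Hu. apply Hd. apply (in_I_between_min_max a b s1 s2); auto; lra.
  - intros u Hu. apply continuity_pt_filterlim, (ex_derive_continuous (V := R_NormedModule)).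
    exists 0. apply Hd. apply (in_I_between_min_max a b s1 s2); auto.
  - lra.
Qed.

Lemma is_derive_locally_0 (f : R -> R) s l :
  locally s (fun u => f u = 0) -> is_derive f s l -> l = 0.
Proof.
  intros H0 Hd.
  assert (H : is_derive (fun _ => 0) s l) by (apply (is_derive_ext_loc f); auto).
  apply is_derive_unique in H. rewrite <- H. apply Derive_const.
Qed.

Lemma is_derive_0_on_I (a b : Rbar) (f : R -> R) s l :
  (forall u, in_I a b u -> f u = 0) -> in_I a b s -> is_derive f s l -> l = 0.
Proof.
  intros H0 Hs. apply is_derive_locally_0.
  apply (filter_imp (in_I a b)); auto. apply locally_in_I; auto.
Qed.

Lemma continuous_locally_neq_0 (f : R -> R) s :
  continuous f s -> f s <> 0 -> locally s (fun u => f u <> 0).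
Proof. intros Hc Hn. apply (Hc (fun v => v <> 0)). apply (locally_open _ _ (open_neq 0)); auto. Qed.

Lemma continuous_adherent_0 (f : R -> R) s : continuous f s ->
  (forall d, 0 < d -> exists u, Rabs (u - s) < d /\ f u = 0) -> f s = 0.
Proof.
  intros Hc H. apply NNPP. intro Hn.
  destruct (continuous_locally_neq_0 f s Hc Hn) as [d Hd].
  destruct (H d (cond_pos d)) as [u [Hu Hfu]]. exact (Hd u Hu Hfu).
Qed.

Lemma clopen_right (I P : R -> Prop) :
  (forall s1 s2 u, I s1 -> I s2 -> s1 <= u <= s2 -> I u) ->
  (forall s, I s -> P s -> exists d, 0 < d /\ forall u, I u -> Rabs (u - s) < d -> P u) ->
  (forall s, I s -> (forall d, 0 < d -> exists u, I u /\ Rabs (u - s) < d /\ P u) -> P s) ->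
  forall s0 s1, I s0 -> P s0 -> I s1 -> s0 <= s1 -> P s1.
Proof.
  intros Hconv Hop Hcl s0 s1 I0 P0 I1 Hle.
  set (E := fun t => s0 <= t <= s1 /\ forall u, s0 <= u <= t -> P u).
  assert (Eb : bound E) by (exists s1; intros t [[_ Ht] _]; auto).
  assert (E0 : E s0).
  { split; [lra|]. intros u Hu. replace u with s0 by lra. auto. }
  destruct (completeness E Eb (ex_intro _ s0 E0)) as [sg [Hub Hlub]].
  assert (Hs0 : s0 <= sg) by (apply Hub; auto).
  assert (Hs1 : sg <= s1) by (apply Hlub; intros t [[_ Ht] _]; auto).
  assert (Isg : I sg) by (apply (Hconv s0 s1); auto).
  assert (Hlt : forall u, s0 <= u < sg -> P u).
  { intros u Hu. destruct (classic (exists t, E t /\ u <= t)) as [[t [[_ Ht] Hut]]|Hn].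
    - apply Ht. lra.
    - exfalso. assert (sg <= u); [|lra].
      apply Hlub. intros t Et. destruct (Rle_dec t u); auto.
      exfalso. apply Hn. exists t. split; auto. lra. }
  assert (Psg : P sg).
  { destruct (Req_dec sg s0) as [->|Hne]; auto.
    apply Hcl; auto. intros d Hd.
    set (u := Rmax s0 (sg - d/2)).
    assert (Hu : s0 <= u < sg) by (unfold u, Rmax; destruct Rle_dec; lra).
    exists u. split; [apply (Hconv s0 s1); auto; lra|]. split; auto.
    unfold u, Rmax; destruct Rle_dec; apply Rabs_def1; lra. }
  destruct (Req_dec sg s1) as [<-|Hne]; auto.
  exfalso. destruct (Hop sg Isg Psg) as [d [Hd Hu]].
  set (t := Rmin s1 (sg + d/2)).
  assert (sg < t) by (unfold t, Rmin; destruct Rle_dec; lra).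
  assert (t <= sg); [|lra].
  apply Hub. split; [unfold t, Rmin; destruct Rle_dec; lra|].
  intros u Hu'. destruct (Rlt_le_dec u sg); [apply Hlt; lra|].
  apply Hu; [apply (Hconv s0 s1); auto; unfold t, Rmin in *; destruct Rle_dec; lra|].
  unfold t, Rmin in *; destruct Rle_dec; apply Rabs_def1; lra.
Qed.

Lemma clopen_in_I (a b : Rbar) (P : R -> Prop) :
  (forall s, in_I a b s -> P s -> exists d, 0 < d /\ forall u, in_I a b u -> Rabs (u - s) < d -> P u) ->
  (forall s, in_I a b s -> (forall d, 0 < d -> exists u, in_I a b u /\ Rabs (u - s) < d /\ P u) -> P s) ->
  forall s0 s1, in_I a b s0 -> P s0 -> in_I a b s1 -> P s1.
Proof.
  intros Hop Hcl s0 s1 I0 P0 I1.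
  destruct (Rle_dec s0 s1) as [Hle|Hgt].
  { apply (clopen_right (in_I a b) P) with s0; auto. apply in_I_between. }
  (* reflect the interval to reduce to the rightward case *)
  set (I' := fun v => in_I a b (- v)). set (P' := fun v => P (- v)).
  assert (Habs : forall u v, Rabs (- u - - v) = Rabs (u - v)).
  { intros u v. rewrite <- Rabs_Ropp. f_equal. ring. }
  assert (H : P' (- s1)).
  { apply (clopen_right I' P') with (- s0); unfold I', P'; rewrite ?Ropp_involutive; auto; try lra.
    - intros t1 t2 v H1 H2 Hv. apply (in_I_between a b (- t2) (- t1)); auto; lra.
    - intros s Is Ps. destruct (Hop (- s) Is Ps) as [d [Hd Hv]]. exists d. split; auto.
      intros v Iv Hvs. apply Hv; auto. rewrite Habs. auto.
    - intros s Is Hs. apply Hcl; auto. intros d Hd. destruct (Hs d Hd) as [v [Iv [Hvs Pv]]].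
      exists (- v). rewrite Habs. auto. }
  unfold P' in H. rewrite Ropp_involutive in H. auto.
Qed.

(* [auto_derive] leaves eta-expanded functions such as [fun t => x t] under [Derive]. *)
Ltac eta_reduce :=
  repeat match goal with |- context [fun t : R => ?f t] =>
    progress change (fun t : R => f t) with f end.

(** * Functions of class C^n on an open set *)

Definition Ck (U : R -> Prop) (n : nat) (f : R -> R) :=
  forall k, (k <= n)%nat -> forall x, U x -> ex_derive_n f k x.

Lemma Ck_0 U f : Ck U 0 f.
Proof. intros k Hk x _. replace k with 0%nat by lia. exact I. Qed.

Lemma ex_derive_n_SS_Derive (f : R -> R) k x :
  ex_derive_n f (S (S k)) x <-> ex_derive_n (Derive f) (S k) x.
Proof.
  assert (E : forall t, Derive_n f (S k) t = Derive_n (Derive f) k t).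
  { intro t. replace (S k) with (k + 1)%nat by lia. rewrite <- (Derive_n_comp f k 1).
    apply Derive_n_ext. reflexivity. }
  simpl. split; apply ex_derive_ext; intro t; [|symmetry]; apply E.
Qed.

Lemma Ck_S (U : R -> Prop) n f :
  (forall x, U x -> ex_derive f x) -> Ck U n (Derive f) -> Ck U (S n) f.
Proof.
  intros H1 H2 [|[|k]] Hk x Hx; [exact I| |].
  - apply (ex_derive_ext f); [reflexivity | exact (H1 x Hx)].
  - apply (proj2 (ex_derive_n_SS_Derive f k x)). apply H2; [lia | exact Hx].
Qed.

Lemma Ck_S_inv (U : R -> Prop) n f :
  Ck U (S n) f -> (forall x, U x -> ex_derive f x) /\ Ck U n (Derive f).
Proof.
  intros H. split.
  - intros x Hx. generalize (H 1%nat ltac:(lia) x Hx). simpl. apply ex_derive_ext. reflexivity.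
  - intros [|k] Hk x Hx; [exact I|].
    apply (proj1 (ex_derive_n_SS_Derive f k x)). apply H; [lia | exact Hx].
Qed.

Lemma Ck_le U n m f : (m <= n)%nat -> Ck U n f -> Ck U m f.
Proof. intros H1 H2 k Hk. apply H2. lia. Qed.

Lemma Ck_ext (U : R -> Prop) n f g :
  open U -> (forall x, U x -> f x = g x) -> Ck U n f -> Ck U n g.
Proof.
  intros Ho He H k Hk x Hx. apply (ex_derive_n_ext_loc f); auto.
  apply (locally_open _ _ Ho); auto.
Qed.

Lemma Ck_S_of_is_derive (U : R -> Prop) n f g :
  open U -> (forall x, U x -> is_derive f x (g x)) -> Ck U n g -> Ck U (S n) f.
Proof.
  intros Ho Hd Hg. apply Ck_S.
  - intros x Hx. exists (g x). auto.
  - apply (Ck_ext U n g); auto. intros x Hx. symmetry. apply is_derive_unique. auto.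
Qed.

Lemma Ck_plus (U : R -> Prop) n f g :
  open U -> Ck U n f -> Ck U n g -> Ck U n (fun x => f x + g x).
Proof.
  intros Ho Hf Hg k Hk x Hx. apply ex_derive_n_plus.
  - apply (locally_open _ _ Ho); auto. intros y Hy j Hj. apply Hf; auto. lia.
  - apply (locally_open _ _ Ho); auto. intros y Hy j Hj. apply Hg; auto. lia.
Qed.

Lemma Ck_opp (U : R -> Prop) n f : Ck U n f -> Ck U n (fun x => - f x).
Proof. intros Hf k Hk x Hx. apply ex_derive_n_opp. auto. Qed.

Lemma Ck_minus (U : R -> Prop) n f g :
  open U -> Ck U n f -> Ck U n g -> Ck U n (fun x => f x - g x).
Proof. intros Ho Hf Hg. apply Ck_plus; auto. apply Ck_opp; auto. Qed.

Lemma Ck_const U n a : Ck U n (fun _ => a).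
Proof. intros k Hk x Hx. apply ex_derive_n_const. Qed.

Lemma Ck_pow U n p : Ck U n (fun x => x ^ p).
Proof. intros k Hk x Hx. apply ex_derive_n_pow. Qed.

Lemma Ck_id U n : Ck U n (fun x => x).
Proof.
  intros k Hk x Hx. apply (ex_derive_n_ext (fun x => x ^ 1)); [intros; simpl; ring|].
  apply ex_derive_n_pow.
Qed.

Lemma Ck_mult (U : R -> Prop) n f g :
  open U -> Ck U n f -> Ck U n g -> Ck U n (fun x => f x * g x).
Proof.
  intros Ho. revert f g. induction n as [|n IH]; intros f g Hf Hg; [apply Ck_0|].
  pose proof Hf as Hf'. pose proof Hg as Hg'.
  apply Ck_S_inv in Hf as [Hf1 Hf2]. apply Ck_S_inv in Hg as [Hg1 Hg2].
  apply Ck_S.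
  - intros x Hx. apply ex_derive_mult; auto.
  - apply (Ck_ext U n (fun x => Derive f x * g x + f x * Derive g x)); [exact Ho| |].
    + intros x Hx. rewrite Derive_mult; auto.
    + apply Ck_plus; [exact Ho| apply IH; [exact Hf2|] | apply IH; [|exact Hg2]];
        apply (Ck_le U (S n)); auto.
Qed.

Lemma Ck_comp (U V : R -> Prop) n psi f :
  open U -> open V -> Ck V n psi -> Ck U n f -> (forall x, U x -> V (f x)) ->
  Ck U n (fun x => psi (f x)).
Proof.
  intros HoU HoV. revert psi f. induction n as [|n IH]; intros psi f Hp Hf HUV; [apply Ck_0|].
  pose proof Hf as Hf'.
  apply Ck_S_inv in Hp as [Hp1 Hp2]. apply Ck_S_inv in Hf as [Hf1 Hf2].
  apply Ck_S.
  - intros x Hx. apply ex_derive_comp; auto.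
  - apply (Ck_ext U n (fun x => Derive psi (f x) * Derive f x)); [exact HoU| |].
    + intros x Hx. rewrite (Derive_comp psi f x); auto. apply Rmult_comm.
    + apply Ck_mult; [exact HoU| |exact Hf2].
      apply IH; [exact Hp2| |exact HUV]. apply (Ck_le U (S n)); auto.
Qed.

Definition Rpos (x : R) := 0 < x.
Definition Rall (x : R) := True.

Lemma open_Rpos : open Rpos.
Proof. apply (open_Rbar_gt (Finite 0)). Qed.

Lemma open_Rall : open Rall.
Proof. apply open_true. Qed.

Lemma Ck_Rinv n : Ck Rpos n Rinv.
Proof.
  induction n as [|n IH]; [apply Ck_0|].
  apply (Ck_S_of_is_derive Rpos n _ (fun x => - (/ x * / x)) open_Rpos).
  - intros x Hx. unfold Rpos in Hx. auto_derive; [lra|]. field. lra.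
  - apply Ck_opp, Ck_mult; auto. apply open_Rpos.
Qed.

Lemma Ck_sqrt n : Ck Rpos n sqrt.
Proof.
  induction n as [|n IH]; [apply Ck_0|].
  apply (Ck_S_of_is_derive Rpos n _ (fun x => / 2 * / sqrt x) open_Rpos).
  - intros x Hx. unfold Rpos in Hx. auto_derive; [lra|].
    assert (0 < sqrt x) by (apply sqrt_lt_R0; lra). field. lra.
  - apply (Ck_mult _ _ (fun _ => / 2)); [apply open_Rpos | apply Ck_const|].
    apply (Ck_comp Rpos Rpos n Rinv sqrt open_Rpos open_Rpos (Ck_Rinv n) IH).
    intros x Hx. apply sqrt_lt_R0. exact Hx.
Qed.

Lemma Ck_cos_sin n : Ck Rall n cos /\ Ck Rall n sin.
Proof.
  induction n as [|n [IHc IHs]]; [split; apply Ck_0|].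
  split.
  - apply (Ck_S_of_is_derive Rall n _ (fun x => - sin x) open_Rall); [|apply Ck_opp; auto].
    intros x _. auto_derive; auto. ring.
  - apply (Ck_S_of_is_derive Rall n _ cos open_Rall); auto.
    intros x _. auto_derive; auto. ring.
Qed.

Section CkComposite.
Variables (U : R -> Prop) (n : nat) (f : R -> R).
Hypotheses (HU : open U) (Hf : Ck U n f).

Lemma Ck_inv : (forall x, U x -> 0 < f x) -> Ck U n (fun x => / f x).
Proof. apply (Ck_comp U Rpos n Rinv f HU open_Rpos (Ck_Rinv n) Hf). Qed.

Lemma Ck_sqrt_comp : (forall x, U x -> 0 < f x) -> Ck U n (fun x => sqrt (f x)).
Proof. apply (Ck_comp U Rpos n sqrt f HU open_Rpos (Ck_sqrt n) Hf). Qed.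

Lemma Ck_cos_comp : Ck U n (fun x => cos (f x)).
Proof. apply (Ck_comp U Rall n cos f HU open_Rall); auto. apply Ck_cos_sin. intros; exact I. Qed.

Lemma Ck_sin_comp : Ck U n (fun x => sin (f x)).
Proof. apply (Ck_comp U Rall n sin f HU open_Rall); auto. apply Ck_cos_sin. intros; exact I. Qed.

Lemma Ck_pow_comp k : Ck U n (fun x => f x ^ k).
Proof. apply (Ck_comp U Rall n (fun x => x ^ k) f HU open_Rall); auto. apply Ck_pow. intros; exact I. Qed.

End CkComposite.

(* Reduces [Ck U n e] for an expression [e] to positivity side conditions. *)
Ltac ck HoU :=
  match goal with
  | |- Ck ?U ?n (fun w => @?A w + @?B w) => apply (Ck_plus U n A B HoU); ck HoU
  | |- Ck ?U ?n (fun w => @?A w - @?B w) => apply (Ck_minus U n A B HoU); ck HoU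
  | |- Ck ?U ?n (fun w => @?A w * @?B w) => apply (Ck_mult U n A B HoU); ck HoU
  | |- Ck ?U ?n (fun w => - @?A w) => apply (Ck_opp U n A); ck HoU
  | |- Ck ?U ?n (fun w => / @?A w) => apply (Ck_inv U n A HoU); [ck HoU | ]
  | |- Ck ?U ?n (fun w => sqrt (@?A w)) => apply (Ck_sqrt_comp U n A HoU); [ck HoU | ]
  | |- Ck ?U ?n (fun w => cos (@?A w)) => apply (Ck_cos_comp U n A HoU); ck HoU
  | |- Ck ?U ?n (fun w => sin (@?A w)) => apply (Ck_sin_comp U n A HoU); ck HoU
  | |- Ck ?U ?n (fun w => w ^ ?k) => apply (Ck_pow U n k)
  | |- Ck ?U ?n (fun w => w) => apply (Ck_id U n)
  | |- Ck ?U ?n (fun w => (@?A w) ^ ?k) => apply (Ck_pow_comp U n A HoU); ck HoU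
  | |- Ck ?U ?n (fun w => ?c) => apply (Ck_const U n c)
  | |- Ck ?U ?n (fun w => @?A w / @?B w) => apply (Ck_mult U n A (fun w => / B w) HoU); ck HoU
  | _ => idtac
  end.

Lemma is_derive_RInt_in_I (a b : Rbar) (g : R -> R) p :
  Ck (in_I a b) 1 g -> in_I a b p -> forall w, in_I a b w -> is_derive (fun u => RInt g p u) w (g w).
Proof.
  intros Hg Hp w Hw. destruct (Ck_S_inv _ _ _ Hg) as [Hg1 _].
  assert (Hc : forall u, in_I a b u -> continuous g u)
    by (intros u Hu; apply (ex_derive_continuous (V := R_NormedModule)); auto).
  apply (is_derive_RInt g (fun u => RInt g p u) p w); auto.
  apply (filter_imp (in_I a b)); [|apply locally_in_I; auto].
  intros v Hv. apply (RInt_correct (V := R_CompleteNormedModule)).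
  apply (ex_RInt_continuous (V := R_CompleteNormedModule)). intros u Hu.
  apply Hc, (in_I_between_min_max a b p v); auto.
Qed.

Lemma Ck_RInt (a b : Rbar) (g : R -> R) p :
  (forall n, Ck (in_I a b) n g) -> in_I a b p -> forall n, Ck (in_I a b) n (fun u => RInt g p u).
Proof.
  intros Hg Hp [|n]; [apply Ck_0|].
  apply (Ck_S_of_is_derive _ n _ g (open_in_I a b)); auto.
  apply is_derive_RInt_in_I; auto.
Qed.

Section IncreasingInverse.
Variables (a b : Rbar) (F dF : R -> R) (p q : R).
Hypotheses (Hp : in_I a b p) (Hq : in_I a b q) (Hpq : p < q).
Hypotheses (HF : forall w, in_I a b w -> is_derive F w (dF w)) (HdF : forall w, in_I a b w -> 0 < dF w).

Lemma in_I_pq w : p <= w <= q -> in_I a b w.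
Proof. apply in_I_between; auto. Qed.

Lemma continuity_pt_in_I w : in_I a b w -> continuity_pt F w.
Proof.
  intros Hw. apply continuity_pt_filterlim, (ex_derive_continuous (V := R_NormedModule)).
  exists (dF w). auto.
Qed.

Lemma increasing_in_I w1 w2 : in_I a b w1 -> in_I a b w2 -> w1 < w2 -> F w1 < F w2.
Proof.
  intros I1 I2 H. destruct (MVT_gen F w1 w2 dF) as [xi [Hxi Hm]].
  - intros u Hu. rewrite Rmin_left, Rmax_right in Hu by lra. apply HF, (in_I_between a b w1 w2); auto; lra.
  - intros u Hu. rewrite Rmin_left, Rmax_right in Hu by lra.
    apply continuity_pt_in_I, (in_I_between a b w1 w2); auto; lra.
  - rewrite Rmin_left, Rmax_right in Hxi by lra.
    assert (0 < dF xi) by (apply HdF, (in_I_between a b w1 w2); auto; lra).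
    assert (0 < dF xi * (w2 - w1)) by (apply Rmult_lt_0_compat; lra). lra.
Qed.

Definition inverse_on s := epsilon (inhabits 0) (fun w => p <= w <= q /\ F w = s).

Lemma inverse_on_spec s : F p <= s <= F q -> p <= inverse_on s <= q /\ F (inverse_on s) = s.
Proof.
  intros Hs. unfold inverse_on. apply epsilon_spec.
  destruct (Req_dec s (F p)) as [->|N1]; [exists p; split; [lra | reflexivity]|].
  destruct (Req_dec s (F q)) as [->|N2]; [exists q; split; [lra | reflexivity]|].
  destruct (Ranalysis5.IVT_interv (fun w => F w - s) p q) as [w [Hw1 Hw2]]; try lra.
  - intros u Hu. apply continuity_pt_minus; [apply continuity_pt_in_I, in_I_pq; auto|].
    apply continuity_pt_const. intros ? ?; auto.
  - exists w. split; auto. lra.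
Qed.

Lemma inverse_on_F w : p <= w <= q -> inverse_on (F w) = w.
Proof.
  intros Hw.
  assert (Hs : F p <= F w <= F q).
  { split; [destruct (Req_dec w p) as [->|N] | destruct (Req_dec w q) as [->|N]]; try lra;
      left; apply increasing_in_I; auto; try apply in_I_pq; lra. }
  destruct (inverse_on_spec _ Hs) as [H1 H2].
  destruct (Rtotal_order (inverse_on (F w)) w) as [L|[E|L]]; auto; exfalso.
  - assert (F (inverse_on (F w)) < F w) by (apply increasing_in_I; auto; apply in_I_pq; auto). lra.
  - assert (F w < F (inverse_on (F w))) by (apply increasing_in_I; auto; apply in_I_pq; auto). lra.
Qed.

Lemma is_derive_inverse_on s : F p < s < F q -> is_derive inverse_on s (/ dF (inverse_on s)).
Proof.
  intros Hs.
  assert (Zp : inverse_on (F p) = p) by (apply inverse_on_F; lra).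
  assert (Zq : inverse_on (F q) = q) by (apply inverse_on_F; lra).
  assert (Hspec : forall u, F p <= u <= F q -> p <= inverse_on u <= q /\ F (inverse_on u) = u)
    by apply inverse_on_spec.
  assert (Prf : forall w, inverse_on (F p) <= w <= inverse_on (F q) -> derivable_pt F w).
  { intros w Hw. rewrite Zp, Zq in Hw. exists (dF w). apply is_derive_Reals, HF, in_I_pq; auto. }
  assert (Cz : continuity_pt inverse_on s).
  { apply (Ranalysis5.continuity_pt_recip_interv F inverse_on p q); auto; try lra.
    - intros u v Hu Huv Hv. apply increasing_in_I; auto; apply in_I_pq; lra.
    - intros u Hu1 Hu2. apply (proj2 (Hspec u ltac:(lra))).
    - intros u Hu1 Hu2. apply (proj1 (Hspec u ltac:(lra))).
    - intros u Hu. apply continuity_pt_in_I, in_I_pq; auto. }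
  assert (Pi : inverse_on (F p) <= inverse_on s <= inverse_on (F q))
    by (rewrite Zp, Zq; apply (proj1 (Hspec s ltac:(lra)))).
  assert (FPQ : F p < F q) by (apply increasing_in_I; auto).
  pose proof (Ranalysis5.derivable_pt_lim_recip_interv F inverse_on (F p) (F q) s Prf Cz FPQ
                (conj (proj1 Hs) (proj2 Hs)) Pi) as D.
  assert (I0 : in_I a b (inverse_on s)) by (apply in_I_pq, (proj1 (Hspec s ltac:(lra)))).
  assert (Dv : derive_pt F (inverse_on s) (Prf (inverse_on s) Pi) = dF (inverse_on s)).
  { apply derive_pt_eq_0, is_derive_Reals, HF; auto. }
  rewrite Dv in D. apply is_derive_Reals. replace (/ dF (inverse_on s)) with (1 / dF (inverse_on s)).
  - apply D; [intros u Hu; apply (proj2 (Hspec u ltac:(lra))) | apply Rgt_not_eq, HdF; auto].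
  - unfold Rdiv. ring.
Qed.

End IncreasingInverse.

(** * Helicoidal surfaces *)

Definition det3 x y z p q r P Q R0 :=
  P * (y*r - z*q) + Q * (z*p - x*r) + R0 * (x*q - y*p).

Lemma orthonormal_frame_decomp x y z p q r v1 v2 v3 :
  x*x + y*y + z*z = 1 -> x*p + y*q + z*r = 0 -> p*p + q*q + r*r = 1 ->
  let n1 := y*r - z*q in let n2 := z*p - x*r in let n3 := x*q - y*p in
  let al := v1*x + v2*y + v3*z in let be := v1*p + v2*q + v3*r in
  let ga := v1*n1 + v2*n2 + v3*n3 in
  v1 = al*x + be*p + ga*n1 /\ v2 = al*y + be*q + ga*n2 /\ v3 = al*z + be*r + ga*n3.
Proof.
  intros H1 H2 H3 n1 n2 n3 al be ga.
  set (e1 := v1 - (al*x + be*p + ga*n1)).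
  set (e2 := v2 - (al*y + be*q + ga*n2)).
  set (e3 := v3 - (al*z + be*r + ga*n3)).
  assert (Hn : n1*n1 + n2*n2 + n3*n3 = 1).
  { transitivity ((x*x+y*y+z*z)*(p*p+q*q+r*r) - (x*p+y*q+z*r)^2);
      [unfold n1, n2, n3; ring | rewrite H1, H2, H3; ring]. }
  (* the error e is orthogonal to the orthonormal frame (xi, xi', xi x xi') *)
  assert (E1 : e1*x + e2*y + e3*z = 0).
  { transitivity (al*(1 - (x*x+y*y+z*z)) - be*(x*p+y*q+z*r));
      [unfold e1, e2, e3, al, be, ga, n1, n2, n3; ring | rewrite H1, H2; ring]. }
  assert (E2 : e1*p + e2*q + e3*r = 0).
  { transitivity (be*(1 - (p*p+q*q+r*r)) - al*(x*p+y*q+z*r));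
      [unfold e1, e2, e3, al, be, ga, n1, n2, n3; ring | rewrite H3, H2; ring]. }
  assert (E3 : e1*n1 + e2*n2 + e3*n3 = 0).
  { transitivity (ga*(1 - (n1*n1+n2*n2+n3*n3)));
      [unfold e1, e2, e3, al, be, ga, n1, n2, n3; ring | rewrite Hn; ring]. }
  assert (Lg : (n1*n1+n2*n2+n3*n3)*(e1*e1+e2*e2+e3*e3) =
     (e1*n1+e2*n2+e3*n3)^2 + (p*(e1*x+e2*y+e3*z) - x*(e1*p+e2*q+e3*r))^2
     + (q*(e1*x+e2*y+e3*z) - y*(e1*p+e2*q+e3*r))^2
     + (r*(e1*x+e2*y+e3*z) - z*(e1*p+e2*q+e3*r))^2) by (unfold n1, n2, n3; ring).
  rewrite Hn, E1, E2, E3 in Lg.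
  assert (e1 = 0 /\ e2 = 0 /\ e3 = 0) as [? [? ?]] by (repeat split; nra).
  unfold e1, e2, e3 in *. repeat split; lra.
Qed.

Lemma ang_mom_sq_alg x y z p q r :
  x*x + y*y + z*z = 1 -> x*p + y*q + z*r = 0 -> p*p + q*q + r*r = 1 ->
  r ^ 2 + (p*y - x*q) ^ 2 = 1 - z ^ 2.
Proof.
  intros H1 H2 H3.
  assert (Lg : (x*p + y*q)^2 + (p*y - x*q)^2 = (x*x + y*y)*(p*p + q*q)) by ring.
  replace (x*p + y*q) with (- (z*r)) in Lg by lra.
  replace (x*x + y*y) with (1 - z*z) in Lg by lra.
  replace (p*p + q*q) with (1 - r*r) in Lg by lra.
  nra.
Qed.

Definition mc_vector (G F E : R) (uss ust utt : R4) : R4 :=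
  r4_add (r4_add (r4_scal G uss) (r4_scal (- (2 * F)) ust)) (r4_scal E utt).

Definition in_span3 (v u1 u2 u3 : R4) : Prop :=
  exists a b c, v = r4_add (r4_add (r4_scal a u1) (r4_scal b u2)) (r4_scal c u3).

(* Numerator of the mean curvature of the helicoidal surface, at a point with
   profile position (x,y,z), velocity (p,q,r) and acceleration (P,Q,R0). *)
Definition minimality_poly h x y z p q r P Q R0 :=
  z * (h^2 * (1 - z^2) + z^2) * det3 x y z p q r P Q R0
  + (p*y - x*q) * (z^2 * (1 + h^2) + 2 * h^2 * r^2).

Section HelicoidFrame.
Variables h x y z p q r P Q R0 : R.
Hypotheses (H1 : x*x + y*y + z*z = 1) (H2 : x*p + y*q + z*r = 0)
  (H3 : p*p + q*q + r*r = 1) (Hz : 0 < z).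

Let u0 := mkR4 x y z 0.
Let us := mkR4 p q r 0.
Let ut := mkR4 (- h * y) (h * x) 0 z.
Let uss := mkR4 P Q R0 0.
Let ust := mkR4 (- h * q) (h * p) 0 r.
Let utt := mkR4 (- h^2 * x) (- h^2 * y) (- z) 0.
Let K := p*y - x*q.
Let G := h^2 * (1 - z^2) + z^2.
Let n1 := y*r - z*q.
Let n2 := z*p - x*r.
Let n3 := x*q - y*p.

Lemma helicoid_first_form :
  r4_dot us us = 1 /\ r4_dot us ut = - h * K /\ r4_dot ut ut = G.
Proof.
  unfold us, ut, K, G, r4_dot; simpl. repeat split; [lra | ring |].
  transitivity (h^2 * (x*x + y*y) + z*z); [ring|]. replace (x*x + y*y) with (1 - z*z) by lra. ring.
Qed.

Lemma helicoid_gram_pos : r4_dot us us * r4_dot ut ut - r4_dot us ut ^ 2 > 0.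
Proof.
  destruct helicoid_first_form as [-> [-> ->]].
  pose proof (ang_mom_sq_alg x y z p q r H1 H2 H3) as L. fold K in L. unfold G.
  assert (0 <= h^2 * r^2) by nra. nra.
Qed.

(* [(n1, n2, n3) = xi x xi'] is the normal of the profile curve in S^2. *)
Lemma helicoid_normal_dots :
  (- h * q) * n1 + (h * p) * n2 = h * z /\
  (- h^2 * x) * n1 + (- h^2 * y) * n2 + (- z) * n3 = z * K * (1 - h^2) /\
  (- h * y) * n1 + (h * x) * n2 = - h * r /\
  x*n1 + y*n2 + z*n3 = 0 /\ p*n1 + q*n2 + r*n3 = 0.
Proof.
  unfold n1, n2, n3, K. repeat split; try ring.
  - transitivity (h * (z * (p*p + q*q) - r * (x*p + y*q))); [ring|].
    replace (p*p + q*q) with (1 - r*r) by lra. replace (x*p + y*q) with (- (z*r)) by lra. ring.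
  - transitivity (h * (- r * (x*x + y*y) + z * (x*p + y*q))); [ring|].
    replace (x*x + y*y) with (1 - z*z) by lra. replace (x*p + y*q) with (- (z*r)) by lra. ring.
Qed.

Lemma mc_vector_in_span_poly :
  in_span3 (mc_vector G (- h * K) 1 uss ust utt) us ut u0 ->
  minimality_poly h x y z p q r P Q R0 = 0.
Proof.
  intros [a [b [c Heq]]].
  unfold mc_vector, r4_add, r4_scal, us, ut, u0, uss, ust, utt in Heq. simpl in Heq.
  injection Heq as E1 E2 E3 E4.
  destruct helicoid_normal_dots as [D1 [D2 [D3 [D4 D5]]]].
  assert (Hb : b * z = 2 * h * K * r) by lra.
  (* take the dot product of the first three coordinates with the normal *)
  assert (Hdot := f_equal2 Rplus (f_equal2 Rplus (f_equal (fun v => v * n1) E1)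
                    (f_equal (fun v => v * n2) E2)) (f_equal (fun v => v * n3) E3)).
  cbv beta in Hdot.
  assert (S1 : G * det3 x y z p q r P Q R0 + 2 * h * K * (h * z) + z * K * (1 - h^2) = b * (- h * r)).
  { rewrite <- D1, <- D2, <- D3. unfold det3. fold n1 n2 n3.
    transitivity (a * (p*n1 + q*n2 + r*n3) + b * ((- h * y) * n1 + (h * x) * n2)
                  + c * (x*n1 + y*n2 + z*n3)); [|rewrite D4, D5; ring].
    lra. }
  unfold minimality_poly. fold G K.
  transitivity (z * (G * det3 x y z p q r P Q R0 + 2 * h * K * (h * z) + z * K * (1 - h^2))
                + 2 * h^2 * K * r^2); [ring|].
  rewrite S1. transitivity (- h * r * (b * z) + 2 * h^2 * K * r^2); [ring|]. rewrite Hb. ring.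
Qed.

Lemma poly_mc_vector_in_span :
  minimality_poly h x y z p q r P Q R0 = 0 ->
  in_span3 (mc_vector G (- h * K) 1 uss ust utt) us ut u0.
Proof.
  intros HM.
  destruct helicoid_normal_dots as [D1 [D2 [D3 [D4 D5]]]].
  set (b := 2 * h * K * r / z).
  set (v1 := G*P + - (2 * (- h * K)) * (- h * q) + 1 * (- h^2 * x) - b * (- h * y)).
  set (v2 := G*Q + - (2 * (- h * K)) * (h * p) + 1 * (- h^2 * y) - b * (h * x)).
  set (v3 := G*R0 + - (2 * (- h * K)) * 0 + 1 * (- z) - b * 0).
  destruct (orthonormal_frame_decomp x y z p q r v1 v2 v3 H1 H2 H3) as [F1 [F2 F3]].
  fold n1 n2 n3 in F1, F2, F3.
  assert (Hga : v1*n1 + v2*n2 + v3*n3 = 0).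
  { transitivity (G * det3 x y z p q r P Q R0 + 2 * h * K * ((- h * q) * n1 + (h * p) * n2)
                  + ((- h^2 * x) * n1 + (- h^2 * y) * n2 + (- z) * n3)
                  - b * ((- h * y) * n1 + (h * x) * n2)); [unfold v1, v2, v3, det3; fold n1 n2 n3; ring|].
    rewrite D1, D2, D3. unfold b.
    apply (Rmult_eq_reg_l z); [|lra]. rewrite Rmult_0_r, <- HM.
    unfold minimality_poly. fold G K. field. lra. }
  rewrite Hga in F1, F2, F3.
  exists (v1*p + v2*q + v3*r), b, (v1*x + v2*y + v3*z).
  unfold mc_vector, r4_add, r4_scal, us, ut, u0, uss, ust, utt. simpl.
  f_equal; [unfold v1 in F1 at 1 | unfold v2 in F2 at 1 | unfold v3 in F3 at 1 | unfold b; field]; lra.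
Qed.

End HelicoidFrame.

(* The one-parameter group of isometries of S^3 generating helicoidal surfaces. *)
Definition rot (h t : R) (u : R4) : R4 :=
  mkR4 (r4_1 u * cos (h*t) - r4_2 u * sin (h*t)) (r4_1 u * sin (h*t) + r4_2 u * cos (h*t))
       (r4_3 u * cos t - r4_4 u * sin t) (r4_3 u * sin t + r4_4 u * cos t).

Lemma r4_dot_rot h t u v : r4_dot (rot h t u) (rot h t v) = r4_dot u v.
Proof.
  unfold rot, r4_dot; simpl.
  pose proof (sin2_cos2 (h*t)) as A. pose proof (sin2_cos2 t) as B. unfold Rsqr in A, B.
  transitivity ((r4_1 u * r4_1 v + r4_2 u * r4_2 v) * (sin (h*t) * sin (h*t) + cos (h*t) * cos (h*t))
    + (r4_3 u * r4_3 v + r4_4 u * r4_4 v) * (sin t * sin t + cos t * cos t)); [ring|].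
  rewrite A, B. ring.
Qed.

Lemma rot_0 h u : rot h 0 u = u.
Proof.
  destruct u. unfold rot; simpl. rewrite Rmult_0_r, cos_0, sin_0. f_equal; ring.
Qed.

Lemma rot_add h t u v : rot h t (r4_add u v) = r4_add (rot h t u) (rot h t v).
Proof. unfold rot, r4_add; simpl. f_equal; ring. Qed.

Lemma rot_scal h t a u : rot h t (r4_scal a u) = r4_scal a (rot h t u).
Proof. unfold rot, r4_scal; simpl. f_equal; ring. Qed.

Lemma in_span3_rot h t v u1 u2 u3 :
  in_span3 v u1 u2 u3 -> in_span3 (rot h t v) (rot h t u1) (rot h t u2) (rot h t u3).
Proof.
  intros [a [b [c ->]]]. exists a, b, c. rewrite !rot_add, !rot_scal. reflexivity.
Qed.

Lemma mc_vector_rot h t G F E uss ust utt :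
  mc_vector G F E (rot h t uss) (rot h t ust) (rot h t utt) = rot h t (mc_vector G F E uss ust utt).
Proof. unfold mc_vector. rewrite !rot_add, !rot_scal. reflexivity. Qed.

Section RotPartials.
Variables (h : R) (G : R -> R -> R4) (f1 f2 f3 f4 : R -> R) (s t : R).
Hypotheses (Hf1 : ex_derive f1 s) (Hf2 : ex_derive f2 s) (Hf3 : ex_derive f3 s)
  (Hf4 : ex_derive f4 s).

Let u v := mkR4 (f1 v) (f2 v) (f3 v) (f4 v).

Lemma pd1_rot :
  locally s (fun v => G v t = rot h t (u v)) ->
  pd1 G s t = rot h t (mkR4 (Derive f1 s) (Derive f2 s) (Derive f3 s) (Derive f4 s)).
Proof.
  intros L.
  assert (E : forall F : R4 -> R,
             Derive (fun v => F (G v t)) s = Derive (fun v => F (rot h t (u v))) s).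
  { intros F. apply Derive_ext_loc. revert L; apply filter_imp; intros v ->; reflexivity. }
  unfold pd1. rewrite (E r4_1), (E r4_2), (E r4_3), (E r4_4).
  unfold rot, u; simpl. f_equal; apply is_derive_unique; auto_derive; auto; eta_reduce; ring.
Qed.

Lemma ex_partials_rot :
  locally s (fun v => G v t = rot h t (u v)) -> (forall w, G s w = rot h w (u s)) ->
  ex_partials G s t.
Proof.
  intros L1 L2.
  assert (A : forall F : R4 -> R,
             ex_derive (fun v => F (rot h t (u v))) s -> ex_derive (fun v => F (G v t)) s).
  { intros F. apply ex_derive_ext_loc. revert L1; apply filter_imp; intros v ->; reflexivity. }
  assert (B : forall F : R4 -> R,
             ex_derive (fun w => F (rot h w (u s))) t -> ex_derive (fun w => F (G s w)) t).
  { intros F. apply ex_derive_ext. intros w. rewrite L2. reflexivity. }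
  intros [|[|[|[|i]]]] Hi; try lia;
    (split; [apply A | apply B]); unfold rot, u; simpl; auto_derive; auto.
Qed.

End RotPartials.

Lemma pd2_rot h (G : R -> R -> R4) s t u :
  (forall w, G s w = rot h w u) ->
  pd2 G s t = rot h t (mkR4 (- h * r4_2 u) (h * r4_1 u) (- r4_4 u) (r4_3 u)).
Proof.
  intros L.
  assert (E : forall F : R4 -> R, Derive (fun w => F (G s w)) t = Derive (fun w => F (rot h w u)) t).
  { intros F. apply Derive_ext. intros w. rewrite L. reflexivity. }
  unfold pd2. rewrite (E r4_1), (E r4_2), (E r4_3), (E r4_4).
  unfold rot; simpl. f_equal; apply is_derive_unique; auto_derive; auto; ring.
Qed.

(** * Profile curves *)

Lemma ex_derive_up_to_order_3 (f : R -> R) s : (forall n, ex_derive_n f n s) ->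
  ex_derive f s /\ ex_derive (Derive f) s /\ ex_derive (Derive (Derive f)) s.
Proof.
  intros H. split; [|split].
  - generalize (H 1%nat). simpl. apply ex_derive_ext. reflexivity.
  - generalize (H 2%nat). simpl. apply ex_derive_ext. intro t. apply Derive_ext. reflexivity.
  - generalize (H 3%nat). simpl. apply ex_derive_ext. intro t.
    apply Derive_ext. intro. apply Derive_ext. reflexivity.
Qed.

Definition geod_curv (x y z : R -> R) s :=
  det3 (x s) (y s) (z s) (Derive x s) (Derive y s) (Derive z s)
       (Derive (Derive x) s) (Derive (Derive y) s) (Derive (Derive z) s).

Definition mean_curv_num h (x y z : R -> R) s :=
  minimality_poly h (x s) (y s) (z s) (Derive x s) (Derive y s) (Derive z s)
       (Derive (Derive x) s) (Derive (Derive y) s) (Derive (Derive z) s).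

Section ProfileCurve.
Variables (a b : Rbar) (x y z : R -> R).
Hypothesis Hc : profile_curve a b x y z.

Lemma ex_derive_profile s : in_I a b s ->
  (ex_derive x s /\ ex_derive (Derive x) s /\ ex_derive (Derive (Derive x)) s) /\
  (ex_derive y s /\ ex_derive (Derive y) s /\ ex_derive (Derive (Derive y)) s) /\
  (ex_derive z s /\ ex_derive (Derive z) s /\ ex_derive (Derive (Derive z)) s).
Proof.
  intros Hs. destruct Hc as [_ H].
  split; [|split]; apply ex_derive_up_to_order_3; intro n; apply (H s Hs).
Qed.

Lemma profile_unit s : in_I a b s -> x s * x s + y s * y s + z s * z s = 1.
Proof. intros Hs. destruct Hc as [_ H]. destruct (H s Hs) as [_ [E _]]. nra. Qed.

Lemma profile_unit_speed s : in_I a b s ->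
  Derive x s * Derive x s + Derive y s * Derive y s + Derive z s * Derive z s = 1.
Proof. intros Hs. destruct Hc as [_ H]. destruct (H s Hs) as [_ [_ [_ E]]]. nra. Qed.

Lemma profile_z_pos s : in_I a b s -> 0 < z s.
Proof. intros Hs. destruct Hc as [_ H]. apply (H s Hs). Qed.

Lemma profile_pos_vel_orth s : in_I a b s ->
  x s * Derive x s + y s * Derive y s + z s * Derive z s = 0.
Proof.
  intros Hs. destruct (ex_derive_profile s Hs) as [[? _] [[? _] [? _]]].
  assert (D : is_derive (fun u => x u * x u + y u * y u + z u * z u - 1) s
      (2 * (x s * Derive x s + y s * Derive y s + z s * Derive z s))).
  { auto_derive; [repeat split; auto | eta_reduce; ring]. }
  apply (is_derive_0_on_I a b) in D; auto; [lra|].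
  intros u Hu. rewrite profile_unit; auto. ring.
Qed.

Lemma profile_vel_acc_orth s : in_I a b s ->
  Derive x s * Derive (Derive x) s + Derive y s * Derive (Derive y) s
  + Derive z s * Derive (Derive z) s = 0.
Proof.
  intros Hs. destruct (ex_derive_profile s Hs) as [[_ [? _]] [[_ [? _]] [_ [? _]]]].
  assert (D : is_derive
      (fun u => Derive x u * Derive x u + Derive y u * Derive y u + Derive z u * Derive z u - 1) s
      (2 * (Derive x s * Derive (Derive x) s + Derive y s * Derive (Derive y) s
            + Derive z s * Derive (Derive z) s))).
  { auto_derive; [repeat split; auto | eta_reduce; ring]. }
  apply (is_derive_0_on_I a b) in D; auto; [lra|].
  intros u Hu. rewrite profile_unit_speed; auto. ring.
Qed.

Lemma profile_pos_acc s : in_I a b s ->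
  x s * Derive (Derive x) s + y s * Derive (Derive y) s + z s * Derive (Derive z) s = -1.
Proof.
  intros Hs. destruct (ex_derive_profile s Hs) as [[? [? _]] [[? [? _]] [? [? _]]]].
  assert (D : is_derive (fun u => x u * Derive x u + y u * Derive y u + z u * Derive z u) s
      ((Derive x s * Derive x s + Derive y s * Derive y s + Derive z s * Derive z s) +
       (x s * Derive (Derive x) s + y s * Derive (Derive y) s + z s * Derive (Derive z) s))).
  { auto_derive; [repeat split; auto | eta_reduce; ring]. }
  apply (is_derive_0_on_I a b) in D; auto; [rewrite profile_unit_speed in D; auto; lra|].
  apply profile_pos_vel_orth.
Qed.

Lemma profile_acc_frame s : in_I a b s ->
  Derive (Derive x) s = - x s + geod_curv x y z s * (y s * Derive z s - z s * Derive y s) /\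
  Derive (Derive y) s = - y s + geod_curv x y z s * (z s * Derive x s - x s * Derive z s) /\
  Derive (Derive z) s = - z s - geod_curv x y z s * ang_mom x y s.
Proof.
  intros Hs.
  pose proof (orthonormal_frame_decomp (x s) (y s) (z s) (Derive x s) (Derive y s) (Derive z s)
     (Derive (Derive x) s) (Derive (Derive y) s) (Derive (Derive z) s)
     (profile_unit s Hs) (profile_pos_vel_orth s Hs) (profile_unit_speed s Hs)) as F.
  cbv zeta in F. pose proof (profile_pos_acc s Hs) as C4. pose proof (profile_vel_acc_orth s Hs) as C5.
  unfold geod_curv, det3, ang_mom.
  set (P := Derive (Derive x) s) in *. set (Q := Derive (Derive y) s) in *.
  set (R0 := Derive (Derive z) s) in *.
  replace (P * x s + Q * y s + R0 * z s) with (-1) in F by lra.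
  replace (P * Derive x s + Q * Derive y s + R0 * Derive z s) with 0 in F by lra.
  destruct F as [F1 [F2 F3]].
  split; [|split]; [rewrite F1 at 1 | rewrite F2 at 1 | rewrite F3 at 1]; ring.
Qed.

Lemma ang_mom_sq s : in_I a b s -> Derive z s ^ 2 + ang_mom x y s ^ 2 = 1 - z s ^ 2.
Proof.
  intros Hs. apply ang_mom_sq_alg;
    [apply profile_unit | apply profile_pos_vel_orth | apply profile_unit_speed]; auto.
Qed.

Lemma profile_z_sq_le_1 s : in_I a b s -> z s ^ 2 <= 1.
Proof. intros Hs. pose proof (ang_mom_sq s Hs). nra. Qed.

Lemma is_derive_ang_mom s : in_I a b s ->
  is_derive (ang_mom x y) s (geod_curv x y z s * Derive z s).
Proof.
  intros Hs. destruct (ex_derive_profile s Hs) as [[? [? _]] [[? [? _]] _]].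
  unfold ang_mom. auto_derive; [repeat split; auto|]. eta_reduce.
  destruct (profile_acc_frame s Hs) as [-> [-> _]].
  pose proof (profile_unit s Hs). pose proof (profile_pos_vel_orth s Hs).
  set (k := geod_curv x y z s).
  transitivity (k * (Derive z s * (x s * x s + y s * y s) - z s * (x s * Derive x s + y s * Derive y s)));
    [ring|].
  replace (x s * x s + y s * y s) with (1 - z s * z s) by lra.
  replace (x s * Derive x s + y s * Derive y s) with (- (z s * Derive z s)) by lra. ring.
Qed.

Lemma continuous_geod_curv s : in_I a b s -> continuous (geod_curv x y z) s.
Proof.
  intros Hs. destruct (ex_derive_profile s Hs) as [[? [? ?]] [[? [? ?]] [? [? ?]]]].
  apply (ex_derive_continuous (V := R_NormedModule)). unfold geod_curv, det3.
  auto_derive. repeat split; auto.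
Qed.

(* If [K = 0] then [kappa z' = K' = 0]; where [kappa <> 0], [z' = 0] nearby, so
   [z'' = 0], contradicting [z'' = - z - kappa K = - z < 0]. *)
Lemma geod_curv_0_of_ang_mom_0 :
  (forall u, in_I a b u -> ang_mom x y u = 0) -> forall s, in_I a b s -> geod_curv x y z s = 0.
Proof.
  intros K0 s Hs. apply NNPP. intro Hk.
  assert (Kz : forall u, in_I a b u -> geod_curv x y z u * Derive z u = 0).
  { intros u Hu. apply (is_derive_0_on_I a b (ang_mom x y) u); auto. apply is_derive_ang_mom; auto. }
  assert (Hz'' : Derive (Derive z) s = 0).
  { apply (is_derive_locally_0 (Derive z) s).
    - generalize (filter_and _ _ (continuous_locally_neq_0 _ s (continuous_geod_curv s Hs) Hk)
                    (locally_in_I a b s Hs)).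
      apply filter_imp. intros u [Hku Hu].
      destruct (Rmult_integral _ _ (Kz u Hu)); [contradiction | auto].
    - apply Derive_correct. apply (ex_derive_profile s Hs). }
  destruct (profile_acc_frame s Hs) as [_ [_ F3]]. rewrite K0 in F3; auto.
  pose proof (profile_z_pos s Hs). lra.
Qed.

End ProfileCurve.

(** * Minimality of helicoidal surfaces *)

Section Helicoid.
Variables (a b : Rbar) (x y z : R -> R) (h : R).
Hypothesis Hc : profile_curve a b x y z.
Let X := helicoidal h x y z.

Lemma helicoidal_rot s t : X s t = rot h t (mkR4 (x s) (y s) (z s) 0).
Proof. unfold X, helicoidal, rot; simpl. f_equal; ring. Qed.

Lemma pd1_helicoidal s t : in_I a b s ->
  pd1 X s t = rot h t (mkR4 (Derive x s) (Derive y s) (Derive z s) 0).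
Proof.
  intros Hs. destruct (ex_derive_profile a b x y z Hc s Hs) as [[? _] [[? _] [? _]]].
  rewrite (pd1_rot h X x y z (fun _ => 0) s t); auto.
  - rewrite Derive_const. reflexivity.
  - apply ex_derive_const.
  - apply filter_forall. intros. apply helicoidal_rot.
Qed.

Lemma pd2_helicoidal s t : pd2 X s t = rot h t (mkR4 (- h * y s) (h * x s) 0 (z s)).
Proof.
  rewrite (pd2_rot h X s t (mkR4 (x s) (y s) (z s) 0)); [simpl; rewrite Ropp_0; reflexivity|].
  intros. apply helicoidal_rot.
Qed.

Lemma pd11_helicoidal s t : in_I a b s ->
  pd1 (pd1 X) s t = rot h t (mkR4 (Derive (Derive x) s) (Derive (Derive y) s) (Derive (Derive z) s) 0).
Proof.
  intros Hs. destruct (ex_derive_profile a b x y z Hc s Hs) as [[_ [? _]] [[_ [? _]] [_ [? _]]]].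
  rewrite (pd1_rot h (pd1 X) (Derive x) (Derive y) (Derive z) (fun _ => 0) s t); auto.
  - rewrite Derive_const. reflexivity.
  - apply ex_derive_const.
  - apply (filter_imp (in_I a b)); [|apply locally_in_I; auto]. intros. apply pd1_helicoidal; auto.
Qed.

Lemma pd21_helicoidal s t : in_I a b s ->
  pd2 (pd1 X) s t = rot h t (mkR4 (- h * Derive y s) (h * Derive x s) 0 (Derive z s)).
Proof.
  intros Hs. rewrite (pd2_rot h (pd1 X) s t (mkR4 (Derive x s) (Derive y s) (Derive z s) 0)).
  - simpl. rewrite Ropp_0. reflexivity.
  - intros. apply pd1_helicoidal; auto.
Qed.

Lemma pd22_helicoidal s t :
  pd2 (pd2 X) s t = rot h t (mkR4 (- h^2 * x s) (- h^2 * y s) (- z s) 0).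
Proof.
  rewrite (pd2_rot h (pd2 X) s t (mkR4 (- h * y s) (h * x s) 0 (z s))).
  - simpl. f_equal. f_equal; ring.
  - intros. apply pd2_helicoidal.
Qed.

Lemma ex_partials_helicoidal s t : in_I a b s ->
  ex_partials X s t /\ ex_partials (pd1 X) s t /\ ex_partials (pd2 X) s t.
Proof.
  intros Hs. destruct (ex_derive_profile a b x y z Hc s Hs) as [[? [? _]] [[? [? _]] [? [? _]]]].
  assert (L1 : locally s (fun v => pd1 X v t = rot h t (mkR4 (Derive x v) (Derive y v) (Derive z v) 0))).
  { apply (filter_imp (in_I a b)); [|apply locally_in_I; auto]. intros. apply pd1_helicoidal; auto. }
  split; [|split].
  - apply (ex_partials_rot h X x y z (fun _ => 0)); try assumption.
    + apply ex_derive_const.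
    + apply filter_forall. intros. apply helicoidal_rot.
    + intros. apply helicoidal_rot.
  - apply (ex_partials_rot h (pd1 X) (Derive x) (Derive y) (Derive z) (fun _ => 0)); try assumption.
    + apply ex_derive_const.
    + intros. apply pd1_helicoidal; auto.
  - apply (ex_partials_rot h (pd2 X) (fun v => - h * y v) (fun v => h * x v) (fun _ => 0) z);
      try assumption.
    + apply ex_derive_scal; assumption.
    + apply ex_derive_scal; assumption.
    + apply ex_derive_const.
    + apply filter_forall. intros. apply pd2_helicoidal.
    + intros. apply pd2_helicoidal.
Qed.

Lemma helicoidal_minimal_iff :
  minimal_in_S3 (strip a b) X <-> forall s, in_I a b s -> mean_curv_num h x y z s = 0.
Proof.
  split; [intros Hm s Hs | intros HM s t Hs; cbv zeta].
  all: pose proof (profile_unit a b x y z Hc s Hs) as H1;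
       pose proof (profile_pos_vel_orth a b x y z Hc s Hs) as H2;
       pose proof (profile_unit_speed a b x y z Hc s Hs) as H3;
       pose proof (profile_z_pos a b x y z Hc s Hs) as Hz;
       destruct (helicoid_first_form h (x s) (y s) (z s) (Derive x s) (Derive y s) (Derive z s)
                   H1 H3) as [E [F G]].
  - destruct (Hm s 0 Hs) as [_ [_ [_ [_ [_ Hspan]]]]].
    rewrite pd1_helicoidal, pd2_helicoidal, pd11_helicoidal, pd21_helicoidal, pd22_helicoidal,
      helicoidal_rot, !rot_0, E, F, G in Hspan; auto.
    apply (mc_vector_in_span_poly h (x s) (y s) (z s) (Derive x s) (Derive y s) (Derive z s)
      (Derive (Derive x) s) (Derive (Derive y) s) (Derive (Derive z) s) H1 H2 H3).
    exact Hspan.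
  - destruct (ex_partials_helicoidal s t Hs) as [P0 [P1 P2]].
    rewrite pd1_helicoidal, pd2_helicoidal, pd11_helicoidal, pd21_helicoidal, pd22_helicoidal,
      helicoidal_rot, !r4_dot_rot; auto.
    split; [unfold r4_dot; simpl; lra|].
    split; [exact P0|]. split; [exact P1|]. split; [exact P2|].
    split; [apply helicoid_gram_pos; auto|].
    rewrite E, F, G.
    pose proof (in_span3_rot h t _ _ _ _ (poly_mc_vector_in_span h (x s) (y s) (z s)
      (Derive x s) (Derive y s) (Derive z s) (Derive (Derive x) s) (Derive (Derive y) s)
      (Derive (Derive z) s) H1 H2 H3 Hz (HM s Hs))) as Hspan.
    rewrite <- mc_vector_rot in Hspan. exact Hspan.
Qed.

End Helicoid.

(** * The angular momenta [K^h_c] *)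

Lemma quartic_pos h c w : 0 < w -> 0 < w ^ 4 + h ^ 2 * c ^ 2.
Proof. intros Hw. assert (0 < w ^ 4) by (apply pow_lt; auto). nra. Qed.

Lemma helix_factor_pos h w : 0 < w -> w ^ 2 <= 1 -> 0 < h ^ 2 + (1 - h ^ 2) * w ^ 2.
Proof. intros Hw Hw1. assert (0 < w ^ 2) by (apply pow_lt; auto). nra. Qed.

Lemma Khc_sq h c w : 0 < w -> w ^ 2 <= 1 ->
  Khc h c w ^ 2 * (w ^ 4 + h ^ 2 * c ^ 2) = c ^ 2 * (h ^ 2 + (1 - h ^ 2) * w ^ 2).
Proof.
  intros Hw Hw1. pose proof (quartic_pos h c w Hw). pose proof (helix_factor_pos h w Hw Hw1).
  assert (0 < sqrt (w ^ 4 + h ^ 2 * c ^ 2)) by (apply sqrt_lt_R0; auto).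
  unfold Khc.
  transitivity (c ^ 2 * sqrt (h ^ 2 + (1 - h ^ 2) * w ^ 2) ^ 2
                / sqrt (w ^ 4 + h ^ 2 * c ^ 2) ^ 2 * (w ^ 4 + h ^ 2 * c ^ 2)); [field; lra|].
  rewrite !pow2_sqrt by lra. field. lra.
Qed.

Lemma speed_law_alg h c w r K :
  K ^ 2 * (w ^ 4 + h ^ 2 * c ^ 2) = c ^ 2 * (h ^ 2 + (1 - h ^ 2) * w ^ 2) ->
  r ^ 2 + K ^ 2 = 1 - w ^ 2 ->
  r ^ 2 * (w ^ 4 + h ^ 2 * c ^ 2) = - w ^ 2 * (w ^ 4 - w ^ 2 + c ^ 2).
Proof. intros HK L. replace (K ^ 2) with (1 - w ^ 2 - r ^ 2) in HK by lra. nra. Qed.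

(* The minimality polynomial vanishes once [kappa K], [z'^2] and [z''] are
   eliminated using the Frenet relation, the speed law and its derivative. *)
Lemma minimality_poly_alg h c w r R0 k K :
  0 < w -> w ^ 2 <= 1 -> 0 < c ->
  k * K = - w - R0 ->
  K ^ 2 * (w ^ 4 + h ^ 2 * c ^ 2) = c ^ 2 * (h ^ 2 + (1 - h ^ 2) * w ^ 2) ->
  r ^ 2 * (w ^ 4 + h ^ 2 * c ^ 2) = - w ^ 2 * (w ^ 4 - w ^ 2 + c ^ 2) ->
  2 * R0 * (w ^ 4 + h ^ 2 * c ^ 2) + 4 * w ^ 3 * r ^ 2 + (6 * w ^ 5 - 4 * w ^ 3 + 2 * c ^ 2 * w) = 0 ->
  w * (h ^ 2 * (1 - w ^ 2) + w ^ 2) * k + K * (w ^ 2 * (1 + h ^ 2) + 2 * h ^ 2 * r ^ 2) = 0.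
Proof.
  intros Hw Hw1 Hc Hk HK Hr HR.
  set (D := w ^ 4 + h ^ 2 * c ^ 2) in *. set (G := h ^ 2 * (1 - w ^ 2) + w ^ 2).
  assert (HD : 0 < D) by apply quartic_pos, Hw.
  assert (HG : 0 < G) by (pose proof (helix_factor_pos h w Hw Hw1); unfold G; lra).
  assert (HK' : K ^ 2 * D = c ^ 2 * G) by (rewrite HK; unfold G; ring).
  assert (HKne : K <> 0).
  { intros ->. assert (0 < c ^ 2 * G) by (apply Rmult_lt_0_compat; [apply pow_lt|]; auto).
    rewrite pow_i in HK' by lia. lra. }
  set (L := w ^ 2 * (1 + h ^ 2) + 2 * h ^ 2 * r ^ 2).
  assert (Z : (w * G * k + K * L) * K * D = 0).
  { transitivity (w * G * D * (k * K) + L * (K ^ 2 * D)); [ring|].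
    rewrite Hk, HK'.
    transitivity (G * (- w ^ 2 * D - w * (R0 * D) + c ^ 2 * L)); [ring|].
    replace (R0 * D) with (- (4 * w ^ 3 * r ^ 2 + (6 * w ^ 5 - 4 * w ^ 3 + 2 * c ^ 2 * w)) / 2) by lra.
    transitivity (G * (- w ^ 2 * D + 2 * (r ^ 2 * D) + 3 * w ^ 6 - 2 * w ^ 4 + 2 * c ^ 2 * w ^ 2
                       + c ^ 2 * h ^ 2 * w ^ 2)); [unfold L, D; field|].
    rewrite Hr. unfold D. ring. }
  destruct (Rmult_integral _ _ Z) as [Z'|]; [|lra].
  destruct (Rmult_integral _ _ Z') as [|]; [auto | contradiction].
Qed.

Lemma z_constant_of_derive_0 (a b : Rbar) (x y z : R -> R) :
  profile_curve a b x y z -> (forall s, in_I a b s -> Derive z s = 0) -> ~ z_nonconstant a b z.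
Proof.
  intros Hc H0 [s1 [s2 [I1 [I2 Hne]]]]. apply Hne.
  apply (const_of_derive_0 a b z); auto. intros s Hs. rewrite <- (H0 s Hs).
  apply Derive_correct. apply (ex_derive_profile a b x y z Hc s Hs).
Qed.

(* The derivative of the speed law is [z'] times this residual. *)
Definition speed_law_residual h c (z : R -> R) s :=
  2 * Derive (Derive z) s * (z s ^ 4 + h ^ 2 * c ^ 2) + 4 * z s ^ 3 * Derive z s ^ 2
  + (6 * z s ^ 5 - 4 * z s ^ 3 + 2 * c ^ 2 * z s).

Section KhcSquared.
Variables (a b : Rbar) (x y z : R -> R) (h c : R).
Hypothesis Hc : profile_curve a b x y z.
Hypothesis HK2 : forall s, in_I a b s ->
  ang_mom x y s ^ 2 * (z s ^ 4 + h ^ 2 * c ^ 2) = c ^ 2 * (h ^ 2 + (1 - h ^ 2) * z s ^ 2).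

Lemma profile_speed_law s : in_I a b s ->
  Derive z s ^ 2 * (z s ^ 4 + h ^ 2 * c ^ 2) = - z s ^ 2 * (z s ^ 4 - z s ^ 2 + c ^ 2).
Proof.
  intros Hs. apply (speed_law_alg h c _ _ (ang_mom x y s)); auto.
  apply (ang_mom_sq a b x y z Hc s Hs).
Qed.

Lemma z_derive_0_of_half_le : 1 / 2 <= c -> forall s, in_I a b s -> Derive z s = 0.
Proof.
  intros Hc2 s Hs. pose proof (profile_speed_law s Hs) as E.
  pose proof (quartic_pos h c (z s) (profile_z_pos a b x y z Hc s Hs)).
  assert (0 <= z s ^ 2 * ((z s ^ 2 - 1/2) ^ 2 + (c ^ 2 - 1/4))) by
    (apply Rmult_le_pos; [apply pow2_ge_0 | pose proof (pow2_ge_0 (z s ^ 2 - 1/2)); nra]).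
  assert (Derive z s ^ 2 <= 0) by nra. nra.
Qed.

Lemma speed_law_residual_mul_derive s : in_I a b s -> Derive z s * speed_law_residual h c z s = 0.
Proof.
  intros Hs. destruct (ex_derive_profile a b x y z Hc s Hs) as [_ [_ [? [? _]]]].
  apply (is_derive_0_on_I a b
    (fun u => Derive z u ^ 2 * (z u ^ 4 + h ^ 2 * c ^ 2) + z u ^ 2 * (z u ^ 4 - z u ^ 2 + c ^ 2)) s); auto.
  - intros u Hu. rewrite profile_speed_law; auto. ring.
  - auto_derive; [repeat split; auto | eta_reduce; unfold speed_law_residual; ring].
Qed.

Lemma continuous_speed_law_residual s : in_I a b s -> continuous (speed_law_residual h c z) s.
Proof.
  intros Hs. destruct (ex_derive_profile a b x y z Hc s Hs) as [_ [_ [? [? ?]]]].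
  apply (ex_derive_continuous (V := R_NormedModule)). unfold speed_law_residual.
  auto_derive. repeat split; auto.
Qed.

(* [z' r = 0] with [r] continuous, so [z'] vanishes near [u]. *)
Lemma derive_0_of_residual_neq_0 u : in_I a b u -> speed_law_residual h c z u <> 0 ->
  Derive z u = 0 /\ Derive (Derive z) u = 0.
Proof.
  intros Hu Hg.
  assert (L : locally u (fun v => Derive z v = 0)).
  { generalize (filter_and _ _ (continuous_locally_neq_0 _ u (continuous_speed_law_residual u Hu) Hg)
                  (locally_in_I a b u Hu)).
    apply filter_imp. intros v [Hgv Hv].
    destruct (Rmult_integral _ _ (speed_law_residual_mul_derive v Hv)); [auto | contradiction]. }
  split; [apply (locally_singleton _ _ L)|].
  apply (is_derive_locally_0 (Derive z) u); auto.
  apply Derive_correct. apply (ex_derive_profile a b x y z Hc u Hu).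
Qed.

(* The set where the residual is nonzero is open and closed in the interval:
   at an adherent point both [6 z^5 - 4 z^3 + 2 c^2 z] and [z^4 - z^2 + c^2]
   vanish, which forces [c = 0] or [c = 1/2]. *)
Lemma speed_law_residual_0 : 0 < c < 1 / 2 -> z_nonconstant a b z ->
  forall s, in_I a b s -> speed_law_residual h c z s = 0.
Proof.
  intros Hc0 Hnc s0 Hs0. apply NNPP. intro Hg0.
  apply (z_constant_of_derive_0 a b x y z Hc); auto.
  intros s Hs. apply (derive_0_of_residual_neq_0 s Hs).
  apply (clopen_in_I a b (fun s => speed_law_residual h c z s <> 0)) with s0; auto.
  - intros u Hu Hg. destruct (continuous_locally_neq_0 _ u (continuous_speed_law_residual u Hu) Hg) as [d Hd].
    exists d. split; [apply cond_pos|]. intros v _ Hv. apply Hd. exact Hv.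
  - intros u Hu Hlim.
    destruct (ex_derive_profile a b x y z Hc u Hu) as [_ [_ [? [? ?]]]].
    pose proof (profile_z_pos a b x y z Hc u Hu) as Zu.
    assert (A1 : speed_law_residual h c z u - (6 * z u ^ 5 - 4 * z u ^ 3 + 2 * c ^ 2 * z u) = 0).
    { apply (continuous_adherent_0
               (fun v => speed_law_residual h c z v - (6 * z v ^ 5 - 4 * z v ^ 3 + 2 * c ^ 2 * z v))).
      - apply (ex_derive_continuous (V := R_NormedModule)). unfold speed_law_residual.
        auto_derive. repeat split; auto.
      - intros d Hd. destruct (Hlim d Hd) as [v [Iv [Hv Pv]]]. exists v. split; auto.
        unfold speed_law_residual. destruct (derive_0_of_residual_neq_0 v Iv Pv) as [-> ->]. ring. }
    assert (A2 : z u ^ 4 - z u ^ 2 + c ^ 2 = 0).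
    { apply (continuous_adherent_0 (fun v => z v ^ 4 - z v ^ 2 + c ^ 2)).
      - apply (ex_derive_continuous (V := R_NormedModule)). auto_derive. repeat split; auto.
      - intros d Hd. destruct (Hlim d Hd) as [v [Iv [Hv Pv]]]. exists v. split; auto.
        destruct (derive_0_of_residual_neq_0 v Iv Pv) as [Z _].
        pose proof (profile_speed_law v Iv) as E. rewrite Z in E.
        pose proof (profile_z_pos a b x y z Hc v Iv). assert (0 < z v ^ 2) by (apply pow_lt; auto).
        nra. }
    intro G0. rewrite G0 in A1.
    set (w := z u) in *. clearbody w.
    assert (B : 3 * w ^ 4 - 2 * w ^ 2 + c ^ 2 = 0) by nra.
    assert (w ^ 2 = 2 * c ^ 2) by lra.
    assert (c ^ 2 * (4 * c ^ 2 - 1) = 0) by nra.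
    assert (0 < c ^ 2) by (apply pow_lt; lra). assert (4 * c ^ 2 - 1 < 0) by nra.
    assert (c ^ 2 * (4 * c ^ 2 - 1) < 0) by (apply Rmult_pos_neg; auto). lra.
Qed.

Lemma mean_curv_num_0_of_Khc_sq : 0 <= c < 1 / 2 -> z_nonconstant a b z ->
  forall s, in_I a b s -> mean_curv_num h x y z s = 0.
Proof.
  intros Hc0 Hnc s Hs.
  pose proof (profile_z_pos a b x y z Hc s Hs) as Hz.
  unfold mean_curv_num, minimality_poly.
  change (det3 (x s) (y s) (z s) (Derive x s) (Derive y s) (Derive z s) (Derive (Derive x) s)
            (Derive (Derive y) s) (Derive (Derive z) s)) with (geod_curv x y z s).
  change (Derive x s * y s - x s * Derive y s) with (ang_mom x y s).
  destruct (Req_dec c 0) as [->|Hcne].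
  - assert (K0 : forall u, in_I a b u -> ang_mom x y u = 0).
    { intros u Hu. pose proof (HK2 u Hu) as E. pose proof (profile_z_pos a b x y z Hc u Hu).
      assert (0 < z u ^ 4) by (apply pow_lt; auto).
      assert (E' : ang_mom x y u ^ 2 * z u ^ 4 = 0).
      { transitivity (ang_mom x y u ^ 2 * (z u ^ 4 + h ^ 2 * 0 ^ 2)); [ring | rewrite E; ring]. }
      destruct (Rmult_integral _ _ E'); [nra | lra]. }
    rewrite (geod_curv_0_of_ang_mom_0 a b x y z Hc K0 s Hs), (K0 s Hs). ring.
  - destruct (profile_acc_frame a b x y z Hc s Hs) as [_ [_ F3]].
    apply (minimality_poly_alg h c (z s) (Derive z s) (Derive (Derive z) s)); auto.
    + apply (profile_z_sq_le_1 a b x y z Hc s Hs).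
    + lra.
    + lra.
    + apply profile_speed_law; auto.
    + apply speed_law_residual_0; auto. lra.
Qed.

End KhcSquared.

Definition first_integral h (x y z : R -> R) u :=
  ang_mom x y u * z u ^ 2 / sqrt (h ^ 2 * Derive z u ^ 2 + z u ^ 2).

Lemma Khc_sq_of_first_integral_alg h P0 w r K :
  0 < w -> P0 * sqrt (h ^ 2 * r ^ 2 + w ^ 2) = K * w ^ 2 -> r ^ 2 + K ^ 2 = 1 - w ^ 2 ->
  K ^ 2 * (w ^ 4 + h ^ 2 * Rabs P0 ^ 2) = Rabs P0 ^ 2 * (h ^ 2 + (1 - h ^ 2) * w ^ 2).
Proof.
  intros Hw HP L. rewrite pow2_abs.
  assert (HP2 : P0 ^ 2 * (h ^ 2 * r ^ 2 + w ^ 2) = K ^ 2 * w ^ 4).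
  { assert (0 < w ^ 2) by (apply pow_lt; auto).
    rewrite <- (pow2_sqrt (h ^ 2 * r ^ 2 + w ^ 2)) by nra.
    transitivity ((P0 * sqrt (h ^ 2 * r ^ 2 + w ^ 2)) ^ 2); [ring|]. rewrite HP. ring. }
  replace (1 - h ^ 2) with (1 - h ^ 2 * 1) by ring.
  replace (h ^ 2 + (1 - h ^ 2 * 1) * w ^ 2) with (h ^ 2 * (r ^ 2 + K ^ 2) + w ^ 2) by (rewrite L; ring).
  transitivity (K ^ 2 * w ^ 4 + h ^ 2 * P0 ^ 2 * K ^ 2); [ring|]. rewrite <- HP2. ring.
Qed.

Lemma ang_mom_Khc_of_first_integral_alg h P0 w r K :
  0 < w -> w ^ 2 <= 1 -> P0 * sqrt (h ^ 2 * r ^ 2 + w ^ 2) = K * w ^ 2 -> r ^ 2 + K ^ 2 = 1 - w ^ 2 ->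
  K = (if Rle_dec 0 P0 then -1 else 1) * Khc h (Rabs P0) w.
Proof.
  intros Hw Hw1 HP L.
  set (c := Rabs P0).
  set (D := w ^ 4 + h ^ 2 * c ^ 2). set (G := h ^ 2 + (1 - h ^ 2) * w ^ 2).
  assert (HD : 0 < D) by apply quartic_pos, Hw.
  assert (HG : 0 < G) by (apply helix_factor_pos; auto).
  assert (Hr := speed_law_alg h c w r K
                  (Khc_sq_of_first_integral_alg h P0 w r K Hw HP L) L).
  fold c D in Hr.
  assert (0 < w ^ 2) by (apply pow_lt; auto).
  (* the speed law gives [h^2 r^2 + w^2 = w^4 G / D] *)
  assert (S : sqrt (h ^ 2 * r ^ 2 + w ^ 2) * sqrt D = w ^ 2 * sqrt G).
  { apply Rsqr_inj; unfold Rsqr.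
    - apply Rmult_le_pos; apply sqrt_pos.
    - apply Rmult_le_pos; [lra | apply sqrt_pos].
    - transitivity ((sqrt (h ^ 2 * r ^ 2 + w ^ 2) * sqrt (h ^ 2 * r ^ 2 + w ^ 2)) * (sqrt D * sqrt D));
        [ring|].
      rewrite !sqrt_sqrt by nra.
      transitivity (h ^ 2 * (r ^ 2 * D) + w ^ 2 * D); [ring|]. rewrite Hr.
      transitivity (w ^ 4 * (sqrt G * sqrt G)); [|ring]. rewrite sqrt_sqrt by lra.
      unfold D, G, c. ring. }
  assert (0 < sqrt D) by (apply sqrt_lt_R0; auto).
  assert (HK : K = P0 * sqrt G / sqrt D).
  { apply (Rmult_eq_reg_r (w ^ 2 * sqrt D)); [|apply Rgt_not_eq, Rmult_lt_0_compat; auto].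
    transitivity ((K * w ^ 2) * sqrt D); [ring|]. rewrite <- HP.
    transitivity (P0 * (sqrt (h ^ 2 * r ^ 2 + w ^ 2) * sqrt D)); [ring|]. rewrite S. field. lra. }
  rewrite HK. unfold Khc. fold D G c.
  unfold c. destruct (Rle_dec 0 P0); [rewrite Rabs_pos_eq | rewrite Rabs_left]; try lra; field; lra.
Qed.

Section FirstIntegral.
Variables (a b : Rbar) (x y z : R -> R) (h : R).
Hypothesis Hc : profile_curve a b x y z.

Lemma is_derive_first_integral s : in_I a b s -> mean_curv_num h x y z s = 0 ->
  is_derive (first_integral h x y z) s 0.
Proof.
  intros Hs HM.
  destruct (ex_derive_profile a b x y z Hc s Hs) as [_ [_ [? [? _]]]].
  pose proof (is_derive_ang_mom a b x y z Hc s Hs) as HK'.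
  pose proof (profile_z_pos a b x y z Hc s Hs) as Hz.
  set (D := h ^ 2 * Derive z s ^ 2 + z s ^ 2).
  assert (HD : 0 < D) by (assert (0 < z s ^ 2) by (apply pow_lt; auto); unfold D; nra).
  assert (HsD : 0 < sqrt D) by (apply sqrt_lt_R0; auto).
  unfold first_integral. auto_derive.
  - repeat split; auto.
    + exists (geod_curv x y z s * Derive z s). exact HK'.
    + replace (h * (h * 1) * (Derive z s * (Derive z s * 1)) + z s * (z s * 1)) with D
        by (unfold D; ring). lra.
  - eta_reduce. rewrite (is_derive_unique _ _ _ HK').
    replace (h * (h * 1) * (Derive z s * (Derive z s * 1)) + z s * (z s * 1)) with D by (unfold D; ring).
    fold (sqrt D).
    destruct (profile_acc_frame a b x y z Hc s Hs) as [_ [_ F3]]. rewrite F3.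
    pose proof (ang_mom_sq a b x y z Hc s Hs) as L.
    unfold mean_curv_num, minimality_poly in HM.
    change (det3 (x s) (y s) (z s) (Derive x s) (Derive y s) (Derive z s) (Derive (Derive x) s)
              (Derive (Derive y) s) (Derive (Derive z) s)) with (geod_curv x y z s) in HM.
    change (Derive x s * y s - x s * Derive y s) with (ang_mom x y s) in HM.
    set (K := ang_mom x y s) in *. set (k := geod_curv x y z s) in *.
    set (w := z s) in *. set (r := Derive z s) in *.
    (* the numerator of the derivative is a combination of [HM] and [L] *)
    apply (Rmult_eq_reg_r (sqrt D * sqrt D * sqrt D));
      [|apply Rgt_not_eq; repeat apply Rmult_lt_0_compat; auto].
    rewrite Rmult_0_l.
    transitivity ((k * r * w ^ 2 + 2 * K * w * r) * (sqrt D * sqrt D)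
                  - K * w ^ 2 * (h ^ 2 * r * (- w - k * K) + w * r)); [field; lra|].
    rewrite sqrt_sqrt by lra. unfold D.
    transitivity (r * w * (w * (h ^ 2 * (1 - w ^ 2) + w ^ 2) * k
                           + K * (w ^ 2 * (1 + h ^ 2) + 2 * h ^ 2 * r ^ 2))
                  + r * w ^ 2 * k * h ^ 2 * (r ^ 2 + K ^ 2 - (1 - w ^ 2))); [ring|].
    rewrite HM, L. ring.
Qed.

Lemma first_integral_relation s : in_I a b s ->
  sqrt (h ^ 2 * Derive z s ^ 2 + z s ^ 2) * first_integral h x y z s = ang_mom x y s * z s ^ 2.
Proof.
  intros Hs. pose proof (profile_z_pos a b x y z Hc s Hs).
  assert (0 < sqrt (h ^ 2 * Derive z s ^ 2 + z s ^ 2)).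
  { apply sqrt_lt_R0. assert (0 < z s ^ 2) by (apply pow_lt; auto). nra. }
  unfold first_integral. field. lra.
Qed.

Lemma ang_mom_Khc_of_minimal : z_nonconstant a b z ->
  (forall s, in_I a b s -> mean_curv_num h x y z s = 0) ->
  exists c eps : R, 0 <= c < 1/2 /\ (eps = 1 \/ eps = -1) /\
    forall s, in_I a b s -> ang_mom x y s = eps * Khc h c (z s).
Proof.
  intros Hnc HM. pose proof Hnc as [s1 [_ [I1 _]]].
  set (P0 := first_integral h x y z s1).
  assert (HP : forall s, in_I a b s ->
            P0 * sqrt (h ^ 2 * Derive z s ^ 2 + z s ^ 2) = ang_mom x y s * z s ^ 2).
  { intros s Hs. rewrite <- (first_integral_relation s Hs), Rmult_comm. f_equal.
    apply (const_of_derive_0 a b); auto. intros u Hu. apply is_derive_first_integral; auto. }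
  assert (HK2 : forall s, in_I a b s -> ang_mom x y s ^ 2 * (z s ^ 4 + h ^ 2 * Rabs P0 ^ 2)
                                    = Rabs P0 ^ 2 * (h ^ 2 + (1 - h ^ 2) * z s ^ 2)).
  { intros s Hs. apply (Khc_sq_of_first_integral_alg h P0 (z s) (Derive z s)).
    - apply (profile_z_pos a b x y z Hc s Hs).
    - apply HP; auto.
    - apply (ang_mom_sq a b x y z Hc s Hs). }
  exists (Rabs P0), (if Rle_dec 0 P0 then -1 else 1). repeat split.
  - apply Rabs_pos.
  - apply Rnot_le_lt. intro Hge.
    exact (z_constant_of_derive_0 a b x y z Hc
             (z_derive_0_of_half_le a b x y z h (Rabs P0) Hc HK2 Hge) Hnc).
  - destruct (Rle_dec 0 P0); auto.
  - intros s Hs. apply (ang_mom_Khc_of_first_integral_alg h P0 (z s) (Derive z s)).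
    + apply (profile_z_pos a b x y z Hc s Hs).
    + apply (profile_z_sq_le_1 a b x y z Hc s Hs).
    + apply HP; auto.
    + apply (ang_mom_sq a b x y z Hc s Hs).
Qed.

End FirstIntegral.

Lemma ang_mom_sq_Khc_sq h c eps w K : (eps = 1 \/ eps = -1) -> 0 < w -> w ^ 2 <= 1 ->
  K = eps * Khc h c w -> K ^ 2 * (w ^ 4 + h ^ 2 * c ^ 2) = c ^ 2 * (h ^ 2 + (1 - h ^ 2) * w ^ 2).
Proof.
  intros Heps Hw Hw1 ->. rewrite <- (Khc_sq h c w Hw Hw1).
  destruct Heps as [-> | ->]; ring.
Qed.

Theorem helicoidal_minimal_iff_ang_mom (h : R) (a b : Rbar) (x y z : R -> R) :
  profile_curve a b x y z -> z_nonconstant a b z ->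
  (minimal_in_S3 (strip a b) (helicoidal h x y z) <->
   exists c eps : R, 0 <= c < 1/2 /\ (eps = 1 \/ eps = -1) /\
     forall s, in_I a b s -> ang_mom x y s = eps * Khc h c (z s)).
Proof.
  intros Hc Hnc. rewrite (helicoidal_minimal_iff a b x y z h Hc). split.
  - apply ang_mom_Khc_of_minimal; auto.
  - intros [c [eps [Hc0 [Heps HK]]]].
    apply (mean_curv_num_0_of_Khc_sq a b x y z h c Hc); auto.
    intros s Hs. apply (ang_mom_sq_Khc_sq h c eps); auto.
    + apply (profile_z_pos a b x y z Hc s Hs).
    + apply (profile_z_sq_le_1 a b x y z Hc s Hs).
Qed.

(** * Uniqueness of the profile curve *)

Lemma exp_weighted_nonincreasing (a b : Rbar) (E dE : R -> R) (k : R) s1 s2 :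
  (forall s, in_I a b s -> is_derive E s (dE s)) ->
  (forall s, in_I a b s -> dE s + k * E s <= 0) ->
  in_I a b s1 -> in_I a b s2 -> s1 <= s2 ->
  E s2 * exp (k * s2) <= E s1 * exp (k * s1).
Proof.
  intros Hd Hs I1 I2 H12.
  set (F := fun u => E u * exp (k * u)).
  assert (Iu : forall u, s1 <= u <= s2 -> in_I a b u) by (intros; apply (in_I_between a b s1 s2); auto).
  destruct (MVT_gen F s1 s2 (fun u => (dE u + k * E u) * exp (k * u))) as [xi [Hxi Hm]].
  - intros u Hu. rewrite Rmin_left, Rmax_right in Hu by lra.
    unfold F. auto_derive; [exists (dE u); apply Hd, Iu; lra|].
    eta_reduce. rewrite (is_derive_unique _ _ _ (Hd u (Iu u ltac:(lra)))). ring.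
  - intros u Hu. rewrite Rmin_left, Rmax_right in Hu by lra.
    apply continuity_pt_filterlim, (ex_derive_continuous (V := R_NormedModule)).
    unfold F. auto_derive. exists (dE u). apply Hd, Iu. lra.
  - rewrite Rmin_left, Rmax_right in Hxi by lra.
    pose proof (Hs xi (Iu xi Hxi)). pose proof (exp_pos (k * xi)).
    assert (F s2 - F s1 <= 0); [|unfold F in *; lra].
    rewrite Hm. apply Rmult_le_0_r; [|lra]. apply Rmult_le_0_r; lra.
Qed.

Lemma gronwall_zero (a b : Rbar) (E dE : R -> R) (C : R) :
  (forall s, in_I a b s -> is_derive E s (dE s)) ->
  (forall s, in_I a b s -> 0 <= E s) ->
  (forall s, in_I a b s -> Rabs (dE s) <= C * E s) ->
  forall s0, in_I a b s0 -> E s0 = 0 -> forall s, in_I a b s -> E s = 0.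
Proof.
  intros Hd Hp Hb s0 I0 E0 s Is.
  pose proof (Hp s Is).
  destruct (Rle_or_lt s0 s) as [Hle|Hlt].
  - assert (Hmono := exp_weighted_nonincreasing a b E dE (- C) s0 s Hd).
    pose proof (exp_pos (- C * s)).
    cut (E s * exp (- C * s) <= 0); [nra|].
    rewrite <- (Rmult_0_l (exp (- C * s0))), <- E0. apply Hmono; auto.
    intros u Iu. pose proof (Hb u Iu). pose proof (Rle_abs (dE u)). lra.
  - assert (Hmono := exp_weighted_nonincreasing a b (fun u => - E u) (fun u => - dE u) C s s0).
    pose proof (exp_pos (C * s)).
    cut (- E s * exp (C * s) >= 0); [nra|].
    apply Rle_ge. rewrite <- (Rmult_0_l (exp (C * s0))), <- Ropp_0, <- E0. apply Hmono; auto; try lra.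
    + intros u Iu. apply (is_derive_opp E). auto.
    + intros u Iu. pose proof (Hb u Iu). pose proof (Rle_abs (- dE u)). rewrite Rabs_Ropp in *. lra.
Qed.

(* [z'' = z_ode_rhs h c z] is the derivative of the speed law divided by [z']. *)
Definition z_ode_rhs h c w :=
  - (4 * w ^ 3 * (- w ^ 2 * (w ^ 4 - w ^ 2 + c ^ 2)) + (6 * w ^ 5 - 4 * w ^ 3 + 2 * c ^ 2 * w)
     * (w ^ 4 + h ^ 2 * c ^ 2)) * / (2 * (w ^ 4 + h ^ 2 * c ^ 2) ^ 2).

Lemma z_ode_rhs_Ck h c n : Ck Rpos n (z_ode_rhs h c).
Proof.
  unfold z_ode_rhs. ck open_Rpos. intros w Hw.
  pose proof (quartic_pos h c w Hw). assert (0 < (w ^ 4 + h ^ 2 * c ^ 2) ^ 2) by (apply pow_lt; lra).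
  lra.
Qed.

Lemma z_ode_rhs_lipschitz h c : 0 < c -> exists M, 0 <= M /\ forall w1 w2,
  c <= w1 <= 1 -> c <= w2 <= 1 -> Rabs (z_ode_rhs h c w1 - z_ode_rhs h c w2) <= M * Rabs (w1 - w2).
Proof.
  intros Hc.
  destruct (Ck_S_inv _ _ _ (z_ode_rhs_Ck h c 2)) as [D1 H2].
  destruct (Ck_S_inv _ _ _ H2) as [D2 _].
  destruct (Rle_or_lt c 1) as [Hc1|Hc1]; [|exists 0; split; [lra | intros; lra]].
  destruct (continuity_ab_maj (fun w => Rabs (Derive (z_ode_rhs h c) w)) c 1 Hc1) as [wM [HM _]].
  { intros w Hw. apply continuity_pt_filterlim, (continuous_comp (Derive (z_ode_rhs h c)) Rabs).
    - apply (ex_derive_continuous (V := R_NormedModule)). apply D2. unfold Rpos. lra.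
    - apply continuous_Rabs. }
  exists (Rabs (Derive (z_ode_rhs h c) wM)). split; [apply Rabs_pos|].
  intros w1 w2 Hw1 Hw2.
  assert (Hmin : c <= Rmin w2 w1) by (apply Rmin_glb; lra).
  assert (Hmax : Rmax w2 w1 <= 1) by (apply Rmax_lub; lra).
  destruct (MVT_gen (z_ode_rhs h c) w2 w1 (Derive (z_ode_rhs h c))) as [xi [Hxi ->]].
  - intros u Hu. apply Derive_correct, D1. unfold Rpos. lra.
  - intros u Hu. apply continuity_pt_filterlim, (ex_derive_continuous (V := R_NormedModule)).
    apply D1. unfold Rpos. lra.
  - rewrite Rabs_mult. apply Rmult_le_compat_r; [apply Rabs_pos|]. apply HM. lra.
Qed.

Section KhcUniqueness.
Variables (a b : Rbar) (x y z : R -> R) (h c : R).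
Hypothesis Hc : profile_curve a b x y z.
Hypotheses (Hc0 : 0 < c < 1/2) (Hnc : z_nonconstant a b z).
Hypothesis HK : forall s, in_I a b s -> ang_mom x y s = Khc h c (z s).

Lemma ang_mom_Khc_sq s : in_I a b s ->
  ang_mom x y s ^ 2 * (z s ^ 4 + h ^ 2 * c ^ 2) = c ^ 2 * (h ^ 2 + (1 - h ^ 2) * z s ^ 2).
Proof.
  intros Hs. apply (ang_mom_sq_Khc_sq h c 1); auto.
  - apply (profile_z_pos a b x y z Hc s Hs).
  - apply (profile_z_sq_le_1 a b x y z Hc s Hs).
  - rewrite HK; auto. ring.
Qed.

Lemma profile_z_ode s : in_I a b s -> Derive (Derive z) s = z_ode_rhs h c (z s).
Proof.
  intros Hs.
  pose proof (speed_law_residual_0 a b x y z h c Hc ang_mom_Khc_sq Hc0 Hnc s Hs) as G0.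
  pose proof (profile_speed_law a b x y z h c Hc ang_mom_Khc_sq s Hs) as PI.
  pose proof (quartic_pos h c (z s) (profile_z_pos a b x y z Hc s Hs)) as HD.
  unfold speed_law_residual in G0. unfold z_ode_rhs.
  set (w := z s) in *. set (r := Derive z s) in *. set (R0 := Derive (Derive z) s) in *.
  clearbody w r R0.
  rewrite <- PI. field_simplify_eq; [|lra]. nra.
Qed.

Lemma profile_z_bounds s : in_I a b s -> c <= z s <= 1.
Proof.
  intros Hs.
  pose proof (profile_speed_law a b x y z h c Hc ang_mom_Khc_sq s Hs) as PI.
  pose proof (profile_z_pos a b x y z Hc s Hs) as Hz.
  pose proof (profile_z_sq_le_1 a b x y z Hc s Hs) as Hz1.
  pose proof (quartic_pos h c (z s) Hz).
  set (w := z s) in *. set (r := Derive z s) in *. clearbody w r.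
  assert (0 < w ^ 2) by (apply pow_lt; auto).
  assert (w ^ 4 - w ^ 2 + c ^ 2 <= 0) by nra.
  split; nra.
Qed.

Lemma profile_z_sq_lt_1 s : in_I a b s -> 0 < 1 - z s ^ 2.
Proof.
  intros Hs. pose proof (ang_mom_Khc_sq s Hs) as E.
  pose proof (ang_mom_sq a b x y z Hc s Hs) as L.
  pose proof (profile_z_pos a b x y z Hc s Hs) as Hz.
  pose proof (helix_factor_pos h (z s) Hz (profile_z_sq_le_1 a b x y z Hc s Hs)).
  assert (0 < c ^ 2) by (apply pow_lt; lra).
  assert (ang_mom x y s <> 0).
  { intros K0. rewrite K0, pow_i in E by lia. nra. }
  assert (0 < ang_mom x y s ^ 2) by (rewrite <- Rsqr_pow2; apply Rsqr_pos_lt; auto).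
  nra.
Qed.

End KhcUniqueness.

Lemma energy_derivative_bound A B F M :
  0 <= M -> Rabs F <= M * Rabs A -> Rabs (2 * A * B + 2 * B * F) <= (1 + M) * (A ^ 2 + B ^ 2).
Proof.
  intros HM HF.
  assert (H1 : Rabs (2 * A * B + 2 * B * F) <= 2 * Rabs A * Rabs B + 2 * Rabs B * Rabs F).
  { eapply Rle_trans; [apply Rabs_triang|]. rewrite !Rabs_mult, (Rabs_pos_eq 2) by lra. lra. }
  assert (H2 : 2 * Rabs B * Rabs F <= 2 * Rabs B * (M * Rabs A)).
  { apply Rmult_le_compat_l; auto. apply Rmult_le_pos; [lra | apply Rabs_pos]. }
  assert (H3 : 2 * Rabs A * Rabs B <= A ^ 2 + B ^ 2).
  { rewrite <- (pow2_abs A), <- (pow2_abs B). pose proof (pow2_ge_0 (Rabs A - Rabs B)). nra. }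
  assert (M * (2 * Rabs A * Rabs B) <= M * (A ^ 2 + B ^ 2)) by (apply Rmult_le_compat_l; auto).
  nra.
Qed.

(* The energy [(z1 - z2)^2 + (z1' - z2')^2] of the difference of two solutions
   of the Lipschitz equation [z'' = z_ode_rhs h c z] obeys Gronwall's inequality. *)
Lemma z_unique_of_Khc (a b : Rbar) (x1 y1 z1 x2 y2 z2 : R -> R) (h c : R) :
  0 < c < 1/2 -> profile_curve a b x1 y1 z1 -> profile_curve a b x2 y2 z2 ->
  z_nonconstant a b z1 -> z_nonconstant a b z2 ->
  (forall s, in_I a b s -> ang_mom x1 y1 s = Khc h c (z1 s)) ->
  (forall s, in_I a b s -> ang_mom x2 y2 s = Khc h c (z2 s)) ->
  forall s0, in_I a b s0 -> z1 s0 = z2 s0 -> Derive z1 s0 = Derive z2 s0 ->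
  forall s, in_I a b s -> z1 s = z2 s.
Proof.
  intros Hc0 Hc1 Hc2 Hn1 Hn2 HK1 HK2 s0 I0 E0 E1 s Is.
  destruct (z_ode_rhs_lipschitz h c (proj1 Hc0)) as [M [HM0 HM]].
  set (E := fun u => (z1 u - z2 u) ^ 2 + (Derive z1 u - Derive z2 u) ^ 2).
  assert (HE : E s = 0).
  { apply (gronwall_zero a b E (fun u => 2 * (z1 u - z2 u) * (Derive z1 u - Derive z2 u)
       + 2 * (Derive z1 u - Derive z2 u) * (z_ode_rhs h c (z1 u) - z_ode_rhs h c (z2 u))) (1 + M))
      with s0; auto.
    - intros u Iu.
      destruct (ex_derive_profile a b x1 y1 z1 Hc1 u Iu) as [_ [_ [? [? _]]]].
      destruct (ex_derive_profile a b x2 y2 z2 Hc2 u Iu) as [_ [_ [? [? _]]]].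
      unfold E. auto_derive; [repeat split; auto|]. eta_reduce.
      rewrite <- (profile_z_ode a b x1 y1 z1 h c Hc1 Hc0 Hn1 HK1 u Iu).
      rewrite <- (profile_z_ode a b x2 y2 z2 h c Hc2 Hc0 Hn2 HK2 u Iu). ring.
    - intros u Iu. unfold E. pose proof (pow2_ge_0 (z1 u - z2 u)).
      pose proof (pow2_ge_0 (Derive z1 u - Derive z2 u)). lra.
    - intros u Iu. unfold E. apply energy_derivative_bound; auto. apply HM.
      + apply (profile_z_bounds a b x1 y1 z1 h c Hc1 Hc0 HK1 u Iu).
      + apply (profile_z_bounds a b x2 y2 z2 h c Hc2 Hc0 HK2 u Iu).
    - unfold E. rewrite E0, E1. ring. }
  unfold E in HE. pose proof (pow2_ge_0 (z1 s - z2 s)).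
  pose proof (pow2_ge_0 (Derive z1 s - Derive z2 s)). nra.
Qed.

Lemma cos_sin_of_unit al be : al ^ 2 + be ^ 2 = 1 -> exists th, cos th = al /\ sin th = be.
Proof.
  intros H. assert (Ha : -1 <= al <= 1) by (split; nra).
  assert (Hs : sqrt (1 - al²) = Rabs be) by (rewrite <- sqrt_Rsqr_abs; f_equal; unfold Rsqr; lra).
  destruct (Rle_or_lt 0 be) as [Hb|Hb].
  - exists (acos al). rewrite cos_acos, sin_acos, Hs, Rabs_pos_eq; auto.
  - exists (- acos al). rewrite cos_neg, sin_neg, cos_acos, sin_acos, Hs, Rabs_left; auto.
    split; auto; ring.
Qed.

Lemma profile_planar_velocity (a b : Rbar) (x y z : R -> R) :
  profile_curve a b x y z -> forall s, in_I a b s ->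
  Derive x s * (1 - z s ^ 2) = - z s * Derive z s * x s + ang_mom x y s * y s /\
  Derive y s * (1 - z s ^ 2) = - z s * Derive z s * y s - ang_mom x y s * x s.
Proof.
  intros Hc s Hs. pose proof (profile_unit a b x y z Hc s Hs).
  pose proof (profile_pos_vel_orth a b x y z Hc s Hs).
  unfold ang_mom. replace (1 - z s ^ 2) with (x s * x s + y s * y s) by lra.
  split; [transitivity (x s * (x s * Derive x s + y s * Derive y s)
                        + (Derive x s * y s - x s * Derive y s) * y s)
         |transitivity (y s * (x s * Derive x s + y s * Derive y s)
                        - (Derive x s * y s - x s * Derive y s) * x s)];
    try ring; replace (x s * Derive x s + y s * Derive y s) with (- (z s * Derive z s)) by lra; ring.
Qed.

Section SameZAngMom.
Variables (a b : Rbar) (x1 y1 z1 x2 y2 z2 : R -> R).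
Hypotheses (Hc1 : profile_curve a b x1 y1 z1) (Hc2 : profile_curve a b x2 y2 z2).
Hypothesis Ez : forall s, in_I a b s -> z2 s = z1 s.
Hypothesis EK : forall s, in_I a b s -> ang_mom x2 y2 s = ang_mom x1 y1 s.
Hypothesis Hrho : forall s, in_I a b s -> 0 < 1 - z1 s ^ 2.

Let rho u := 1 - z1 u ^ 2.
Let P u := x2 u * x1 u + y2 u * y1 u.
Let Q u := y2 u * x1 u - x2 u * y1 u.

(* [P + iQ = (x2 + i y2) (x1 - i y1)]; both factors solve [w' = lambda w] with
   the same [lambda = - (z z' + i K) / rho], so [(P + iQ) / rho] is constant. *)
Lemma rotation_invariants_const s0 s : in_I a b s0 -> in_I a b s ->
  P s / rho s = P s0 / rho s0 /\ Q s / rho s = Q s0 / rho s0.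
Proof.
  intros I0 Is.
  assert (Dz : forall u, in_I a b u -> Derive z2 u = Derive z1 u).
  { intros u Iu. apply Derive_ext_loc. apply (filter_imp (in_I a b)); auto. apply locally_in_I; auto. }
  split; [apply (const_of_derive_0 a b (fun v => P v / rho v))
         |apply (const_of_derive_0 a b (fun v => Q v / rho v))]; auto; intros v Iv;
    destruct (ex_derive_profile a b x1 y1 z1 Hc1 v Iv) as [[? _] [[? _] [? _]]];
    destruct (ex_derive_profile a b x2 y2 z2 Hc2 v Iv) as [[? _] [[? _] _]];
    destruct (profile_planar_velocity a b x1 y1 z1 Hc1 v Iv) as [F1 G1];
    destruct (profile_planar_velocity a b x2 y2 z2 Hc2 v Iv) as [F2 G2];
    rewrite Ez, Dz, EK in F2, G2 by auto;
    pose proof (Hrho v Iv); unfold P, Q, rho;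
    (auto_derive; [repeat split; auto; lra|]); eta_reduce;
    apply (Rmult_eq_reg_r ((1 - z1 v ^ 2) ^ 2)); try (apply Rgt_not_eq; apply pow_lt; lra).
  - transitivity ((Derive x2 v * (1 - z1 v ^ 2)) * x1 v + x2 v * (Derive x1 v * (1 - z1 v ^ 2))
                  + (Derive y2 v * (1 - z1 v ^ 2)) * y1 v + y2 v * (Derive y1 v * (1 - z1 v ^ 2))
                  + 2 * z1 v * Derive z1 v * (x2 v * x1 v + y2 v * y1 v)); [field; lra|].
    rewrite F1, G1, F2, G2. ring.
  - transitivity ((Derive y2 v * (1 - z1 v ^ 2)) * x1 v + y2 v * (Derive x1 v * (1 - z1 v ^ 2))
                  - (Derive x2 v * (1 - z1 v ^ 2)) * y1 v - x2 v * (Derive y1 v * (1 - z1 v ^ 2))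
                  + 2 * z1 v * Derive z1 v * (y2 v * x1 v - x2 v * y1 v)); [field; lra|].
    rewrite F1, G1, F2, G2. ring.
Qed.

Lemma rotation_of_same_z_ang_mom s0 : in_I a b s0 ->
  exists alpha : R, forall s, in_I a b s ->
    x2 s = x1 s * cos alpha - y1 s * sin alpha /\ y2 s = x1 s * sin alpha + y1 s * cos alpha.
Proof.
  intros I0.
  set (al := P s0 / rho s0). set (be := Q s0 / rho s0).
  assert (N1 : forall u, in_I a b u -> x1 u * x1 u + y1 u * y1 u = rho u).
  { intros u Iu. unfold rho. pose proof (profile_unit a b x1 y1 z1 Hc1 u Iu). lra. }
  assert (N2 : forall u, in_I a b u -> x2 u * x2 u + y2 u * y2 u = rho u).
  { intros u Iu. unfold rho. pose proof (profile_unit a b x2 y2 z2 Hc2 u Iu). rewrite <- (Ez u Iu). lra. }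
  assert (Hab : al ^ 2 + be ^ 2 = 1).
  { unfold al, be. pose proof (Hrho s0 I0). fold (rho s0) in *.
    apply (Rmult_eq_reg_r (rho s0 ^ 2)); [|apply Rgt_not_eq; apply pow_lt; lra].
    transitivity (P s0 ^ 2 + Q s0 ^ 2); [field; lra|].
    transitivity ((x2 s0 * x2 s0 + y2 s0 * y2 s0) * (x1 s0 * x1 s0 + y1 s0 * y1 s0)); [unfold P, Q; ring|].
    rewrite N1, N2 by auto. ring. }
  destruct (cos_sin_of_unit al be Hab) as [th [Hcos Hsin]].
  exists th. intros s Is. rewrite Hcos, Hsin.
  destruct (rotation_invariants_const s0 s I0 Is) as [CP CQ]. fold al be in CP, CQ.
  pose proof (Hrho s Is). fold (rho s) in *.
  assert (EP : P s = al * rho s) by (rewrite <- CP; field; lra).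
  assert (EQ : Q s = be * rho s) by (rewrite <- CQ; field; lra).
  split; apply (Rmult_eq_reg_r (rho s)); try lra; rewrite <- (N1 s Is) at 1;
    [transitivity (x1 s * P s - y1 s * Q s) | transitivity (y1 s * P s + x1 s * Q s)];
    try (unfold P, Q; ring); rewrite EP, EQ; ring.
Qed.

End SameZAngMom.

Definition harmonic_on (a b : Rbar) (f : R -> R) :=
  forall s, in_I a b s -> ex_derive f s /\ ex_derive (Derive f) s /\ Derive (Derive f) s = - f s.

Lemma Derive_lin2 (f g : R -> R) al be s : ex_derive f s -> ex_derive g s ->
  Derive (fun u => f u * al + g u * be) s = Derive f s * al + Derive g s * be.
Proof. intros Hf Hg. apply is_derive_unique. auto_derive; auto. eta_reduce. ring. Qed.

Lemma harmonic_on_lin2 (a b : Rbar) (f g : R -> R) al be :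
  harmonic_on a b f -> harmonic_on a b g -> harmonic_on a b (fun u => f u * al + g u * be).
Proof.
  intros Hf Hg s Hs.
  destruct (Hf s Hs) as [F1 [F2 F3]], (Hg s Hs) as [G1 [G2 G3]].
  assert (E : locally s (fun u => Derive f u * al + Derive g u * be
                                  = Derive (fun v => f v * al + g v * be) u)).
  { apply (filter_imp (in_I a b)); [|apply locally_in_I; auto].
    intros u Hu. symmetry. apply Derive_lin2; [apply Hf | apply Hg]; auto. }
  split; [|split].
  - auto_derive; auto.
  - apply (ex_derive_ext_loc _ _ s E). auto_derive; auto.
  - rewrite <- (Derive_ext_loc _ _ s E), Derive_lin2, F3, G3; auto. ring.
Qed.

Lemma harmonic_on_unique (a b : Rbar) (f g : R -> R) s0 :
  harmonic_on a b f -> harmonic_on a b g -> in_I a b s0 ->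
  f s0 = g s0 -> Derive f s0 = Derive g s0 -> forall s, in_I a b s -> f s = g s.
Proof.
  intros Hf Hg I0 E0 E1 s Is.
  assert (C : (f s - g s) ^ 2 + (Derive f s - Derive g s) ^ 2
            = (f s0 - g s0) ^ 2 + (Derive f s0 - Derive g s0) ^ 2).
  { apply (const_of_derive_0 a b (fun u => (f u - g u) ^ 2 + (Derive f u - Derive g u) ^ 2)); auto.
    intros u Iu. destruct (Hf u Iu) as [F1 [F2 F3]], (Hg u Iu) as [G1 [G2 G3]].
    auto_derive; [repeat split; auto|]. eta_reduce. rewrite F3, G3. ring. }
  rewrite E0, E1 in C. pose proof (pow2_ge_0 (Derive f s - Derive g s)). nra.
Qed.

Lemma harmonic_on_profile (a b : Rbar) (x y z : R -> R) :
  profile_curve a b x y z -> (forall u, in_I a b u -> ang_mom x y u = 0) ->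
  harmonic_on a b x /\ harmonic_on a b y /\ harmonic_on a b z.
Proof.
  intros Hc K0.
  assert (k0 := geod_curv_0_of_ang_mom_0 a b x y z Hc K0).
  split; [|split]; intros s Hs;
    destruct (ex_derive_profile a b x y z Hc s Hs) as [[? [? _]] [[? [? _]] [? [? _]]]];
    destruct (profile_acc_frame a b x y z Hc s Hs) as [F1 [F2 F3]]; rewrite k0 in F1, F2, F3; auto;
    repeat split; auto; lra.
Qed.

Lemma rotation_of_equal_norms u1 v1 u2 v2 :
  0 < u1 ^ 2 + v1 ^ 2 -> u1 ^ 2 + v1 ^ 2 = u2 ^ 2 + v2 ^ 2 ->
  exists al be, al ^ 2 + be ^ 2 = 1 /\ u2 = u1 * al - v1 * be /\ v2 = u1 * be + v1 * al.
Proof.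
  intros Hpos N. set (rho := u1 ^ 2 + v1 ^ 2) in *.
  exists ((u1 * u2 + v1 * v2) / rho), ((u1 * v2 - v1 * u2) / rho). repeat split.
  - apply (Rmult_eq_reg_r (rho ^ 2)); [|apply Rgt_not_eq; apply pow_lt; lra].
    transitivity ((u1 ^ 2 + v1 ^ 2) * (u2 ^ 2 + v2 ^ 2)); [field; lra|]. rewrite <- N. fold rho. ring.
  - apply (Rmult_eq_reg_r rho); [|lra]. unfold rho. field. fold rho. lra.
  - apply (Rmult_eq_reg_r rho); [|lra]. unfold rho. field. fold rho. lra.
Qed.

Lemma rotation_of_parallel_pairs a1 b1 a2 b2 p1 q1 p2 q2 :
  a1 ^ 2 + b1 ^ 2 = a2 ^ 2 + b2 ^ 2 -> p1 ^ 2 + q1 ^ 2 = p2 ^ 2 + q2 ^ 2 ->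
  a1 * p1 + b1 * q1 = a2 * p2 + b2 * q2 ->
  p1 * b1 - a1 * q1 = 0 -> p2 * b2 - a2 * q2 = 0 -> 0 < a1 ^ 2 + b1 ^ 2 + p1 ^ 2 + q1 ^ 2 ->
  exists al be, al ^ 2 + be ^ 2 = 1 /\ a2 = a1 * al - b1 * be /\ b2 = a1 * be + b1 * al /\
                p2 = p1 * al - q1 * be /\ q2 = p1 * be + q1 * al.
Proof.
  intros N1 N2 T K1 K2 Pos.
  destruct (Rlt_or_le 0 (a1 ^ 2 + b1 ^ 2)) as [Hr|Hr].
  - destruct (rotation_of_equal_norms a1 b1 a2 b2 Hr N1) as [al [be [Hab [Ra Rb]]]].
    (* parallelism: [(p, q) rho = tau (a, b)] for both pairs *)
    set (rho := a1 ^ 2 + b1 ^ 2) in *. set (tau := a1 * p1 + b1 * q1) in *.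
    assert (P1 : p1 * rho = a1 * tau).
    { transitivity (a1 * tau + b1 * (p1 * b1 - a1 * q1)); [unfold rho, tau; ring | rewrite K1; ring]. }
    assert (Q1 : q1 * rho = b1 * tau).
    { transitivity (b1 * tau - a1 * (p1 * b1 - a1 * q1)); [unfold rho, tau; ring | rewrite K1; ring]. }
    assert (P2 : p2 * rho = a2 * tau).
    { rewrite N1, T. transitivity (a2 * (a2 * p2 + b2 * q2) + b2 * (p2 * b2 - a2 * q2));
        [ring | rewrite K2; ring]. }
    assert (Q2 : q2 * rho = b2 * tau).
    { rewrite N1, T. transitivity (b2 * (a2 * p2 + b2 * q2) - a2 * (p2 * b2 - a2 * q2));
        [ring | rewrite K2; ring]. }
    exists al, be. repeat split; auto.
    + apply (Rmult_eq_reg_r rho); [|lra]. rewrite P2, Ra.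
      transitivity ((a1 * tau) * al - (b1 * tau) * be); [ring|]. rewrite <- P1, <- Q1. ring.
    + apply (Rmult_eq_reg_r rho); [|lra]. rewrite Q2, Rb.
      transitivity ((a1 * tau) * be + (b1 * tau) * al); [ring|]. rewrite <- P1, <- Q1. ring.
  - assert (a1 = 0 /\ b1 = 0) as [-> ->] by (split; nra).
    assert (a2 = 0 /\ b2 = 0) as [-> ->] by (split; nra).
    destruct (rotation_of_equal_norms p1 q1 p2 q2) as [al [be [Hab [Rp Rq]]]]; auto.
    + rewrite !pow_i in Pos by lia. lra.
    + exists al, be. repeat split; auto; ring.
Qed.

Lemma great_circle_rotation (a b : Rbar) (x1 y1 z1 x2 y2 z2 : R -> R) s0 :
  profile_curve a b x1 y1 z1 -> profile_curve a b x2 y2 z2 ->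
  (forall s, in_I a b s -> ang_mom x1 y1 s = 0) -> (forall s, in_I a b s -> ang_mom x2 y2 s = 0) ->
  in_I a b s0 -> z1 s0 = z2 s0 -> Derive z1 s0 = Derive z2 s0 ->
  exists alpha : R, forall s, in_I a b s ->
    x2 s = x1 s * cos alpha - y1 s * sin alpha /\ y2 s = x1 s * sin alpha + y1 s * cos alpha /\
    z2 s = z1 s.
Proof.
  intros Hc1 Hc2 HK1 HK2 I0 E0 E1.
  destruct (harmonic_on_profile a b x1 y1 z1 Hc1 HK1) as [Hx1 [Hy1 Hz1]].
  destruct (harmonic_on_profile a b x2 y2 z2 Hc2 HK2) as [Hx2 [Hy2 Hz2]].
  pose proof (profile_unit a b x1 y1 z1 Hc1 s0 I0). pose proof (profile_unit a b x2 y2 z2 Hc2 s0 I0).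
  pose proof (profile_pos_vel_orth a b x1 y1 z1 Hc1 s0 I0).
  pose proof (profile_pos_vel_orth a b x2 y2 z2 Hc2 s0 I0).
  pose proof (profile_unit_speed a b x1 y1 z1 Hc1 s0 I0).
  pose proof (profile_unit_speed a b x2 y2 z2 Hc2 s0 I0).
  pose proof (ang_mom_sq a b x1 y1 z1 Hc1 s0 I0) as L1.
  pose proof (HK1 s0 I0) as K1. pose proof (HK2 s0 I0) as K2. unfold ang_mom in K1, K2, L1.
  destruct (rotation_of_parallel_pairs (x1 s0) (y1 s0) (x2 s0) (y2 s0)
              (Derive x1 s0) (Derive y1 s0) (Derive x2 s0) (Derive y2 s0))
    as [al [be [Hab [R1 [R2 [R3 R4]]]]]]; try nra.
  destruct (cos_sin_of_unit al be Hab) as [th [Hcos Hsin]].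
  exists th. intros s Is. rewrite Hcos, Hsin.
  destruct (Hx1 s0 I0) as [X1 _]. destruct (Hy1 s0 I0) as [Y1 _].
  rewrite (harmonic_on_unique a b x2 (fun u => x1 u * al + y1 u * (- be)) s0),
          (harmonic_on_unique a b y2 (fun u => x1 u * be + y1 u * al) s0),
          (harmonic_on_unique a b z2 z1 s0); auto; try apply harmonic_on_lin2; auto;
    try rewrite Derive_lin2; auto; try lra.
Qed.

Lemma Khc_0 h w : Khc h 0 w = 0.
Proof. unfold Khc, Rdiv. ring. Qed.

Theorem profile_Khc_unique (h c : R) (a b : Rbar) (x1 y1 z1 x2 y2 z2 : R -> R) :
  0 <= c < 1/2 ->
  profile_curve a b x1 y1 z1 -> profile_curve a b x2 y2 z2 ->
  z_nonconstant a b z1 -> z_nonconstant a b z2 ->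
  (forall s, in_I a b s -> ang_mom x1 y1 s = Khc h c (z1 s)) ->
  (forall s, in_I a b s -> ang_mom x2 y2 s = Khc h c (z2 s)) ->
  (exists s0, in_I a b s0 /\ z1 s0 = z2 s0 /\ Derive z1 s0 = Derive z2 s0) ->
  exists alpha : R, forall s, in_I a b s ->
    x2 s = x1 s * cos alpha - y1 s * sin alpha /\
    y2 s = x1 s * sin alpha + y1 s * cos alpha /\
    z2 s = z1 s.
Proof.
  intros Hc0 Hc1 Hc2 Hn1 Hn2 HK1 HK2 [s0 [I0 [E0 E1]]].
  destruct (Req_dec c 0) as [->|Hc].
  - apply (great_circle_rotation a b x1 y1 z1 x2 y2 z2 s0); auto;
      intros s Is; [rewrite HK1 | rewrite HK2]; auto; apply Khc_0.
  - assert (Hcpos : 0 < c < 1/2) by lra.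
    assert (Ez : forall s, in_I a b s -> z2 s = z1 s).
    { intros s Is. symmetry.
      apply (z_unique_of_Khc a b x1 y1 z1 x2 y2 z2 h c Hcpos Hc1 Hc2 Hn1 Hn2 HK1 HK2 s0); auto. }
    destruct (rotation_of_same_z_ang_mom a b x1 y1 z1 x2 y2 z2 Hc1 Hc2 Ez) with s0 as [al Hal]; auto.
    + intros s Is. rewrite HK1, HK2, Ez; auto.
    + intros s Is. apply (profile_z_sq_lt_1 a b x1 y1 z1 h c Hc1 Hcpos HK1 s Is).
    + exists al. intros s Is. destruct (Hal s Is). auto.
Qed.

(** * Existence of the profile curves *)

Section Existence.
Variables (h c : R).
Hypothesis Hc : 0 < c < 1/2.

(* [z'^2 = 1 - z^2 - K^2] is positive exactly when [(z^2 - 1/2)^2 < 1/4 - c^2]. *)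
Definition half_width := sqrt (1/4 - c ^ 2).

Lemma half_width_spec : 0 < half_width < 1/2 /\ half_width ^ 2 = 1/4 - c ^ 2.
Proof.
  unfold half_width. assert (0 < 1/4 - c ^ 2) by nra.
  assert (E : sqrt (1/4 - c ^ 2) ^ 2 = 1/4 - c ^ 2) by (apply pow2_sqrt; lra).
  assert (0 < sqrt (1/4 - c ^ 2)) by (apply sqrt_lt_R0; auto).
  assert (0 < c ^ 2) by (apply pow_lt; lra). repeat split; auto; nra.
Qed.

Definition w_min := sqrt (1/2 - half_width).
Definition w_max := sqrt (1/2 + half_width).
Definition w_range := in_I (Finite w_min) (Finite w_max).

Lemma w_range_spec w : w_range w -> 0 < w /\ 1/2 - half_width < w ^ 2 < 1/2 + half_width.
Proof.
  intros [H1 H2]. unfold w_min, w_max in *. simpl in H1, H2. destruct half_width_spec as [[HA HA'] _].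
  assert (0 < sqrt (1/2 - half_width)) by (apply sqrt_lt_R0; lra).
  pose proof (pow2_sqrt (1/2 - half_width) ltac:(lra)).
  pose proof (pow2_sqrt (1/2 + half_width) ltac:(lra)).
  pose proof (sqrt_pos (1/2 + half_width)).
  repeat split; nra.
Qed.

Lemma w_range_sq_lt_1 w : w_range w -> w ^ 2 < 1.
Proof. intros Hw. destruct (w_range_spec w Hw) as [_ [_ ?]]. destruct half_width_spec. lra. Qed.

Definition z_speed w := sqrt (1 - w ^ 2 - Khc h c w ^ 2).
Definition arc_density w := / z_speed w.
Definition angle_density w := - Khc h c w / (1 - w ^ 2) / z_speed w.

Lemma z_speed_sq_pos w : w_range w -> 0 < 1 - w ^ 2 - Khc h c w ^ 2.
Proof.
  intros Hw. destruct (w_range_spec w Hw) as [Hw0 [W1 W2]]. destruct half_width_spec as [[HA _] AE].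
  pose proof (quartic_pos h c w Hw0). pose proof (w_range_sq_lt_1 w Hw).
  assert (E : (1 - w ^ 2 - Khc h c w ^ 2) * (w ^ 4 + h ^ 2 * c ^ 2)
              = w ^ 2 * (half_width ^ 2 - (w ^ 2 - 1/2) ^ 2)).
  { transitivity ((1 - w ^ 2) * (w ^ 4 + h ^ 2 * c ^ 2) - Khc h c w ^ 2 * (w ^ 4 + h ^ 2 * c ^ 2)); [ring|].
    rewrite Khc_sq, AE by lra. field. }
  assert (0 < w ^ 2) by (apply pow_lt; auto).
  assert (0 < half_width ^ 2 - (w ^ 2 - 1/2) ^ 2) by nra.
  assert (0 < w ^ 2 * (half_width ^ 2 - (w ^ 2 - 1/2) ^ 2)) by (apply Rmult_lt_0_compat; auto).
  nra.
Qed.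

Lemma z_speed_pos w : w_range w -> 0 < z_speed w.
Proof. intros Hw. apply sqrt_lt_R0, z_speed_sq_pos, Hw. Qed.

Lemma z_speed_Ck n : Ck w_range n z_speed.
Proof.
  assert (Ho : open w_range) by apply open_in_I.
  unfold z_speed, Khc. ck Ho; intros w Hw; destruct (w_range_spec w Hw) as [Hw0 _];
    pose proof (w_range_sq_lt_1 w Hw).
  - apply helix_factor_pos; auto; lra.
  - apply quartic_pos; auto.
  - apply sqrt_lt_R0, quartic_pos; auto.
  - apply (z_speed_sq_pos w Hw).
Qed.

Lemma arc_density_Ck n : Ck w_range n arc_density.
Proof. apply Ck_inv; [apply open_in_I | apply z_speed_Ck | apply z_speed_pos]. Qed.

Lemma angle_density_Ck n : Ck w_range n angle_density.
Proof.
  assert (Ho : open w_range) by apply open_in_I.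
  unfold angle_density. apply (Ck_mult _ n _ (fun w => / z_speed w) Ho); [|apply arc_density_Ck].
  unfold Khc. ck Ho; intros w Hw; destruct (w_range_spec w Hw) as [Hw0 _];
    pose proof (w_range_sq_lt_1 w Hw).
  - apply helix_factor_pos; auto; lra.
  - apply quartic_pos; auto.
  - apply sqrt_lt_R0, quartic_pos; auto.
  - lra.
Qed.

Definition w_lo := sqrt (1/2 - half_width / 2).
Definition w_hi := sqrt (1/2 + half_width / 2).

Lemma w_lo_hi_spec : w_range w_lo /\ w_range w_hi /\ w_lo < w_hi.
Proof.
  destruct half_width_spec as [[? ?] _]. unfold w_range, in_I, w_lo, w_hi, w_min, w_max; simpl.
  repeat split; apply sqrt_lt_1; lra.
Qed.

Definition arclength w := RInt arc_density w_lo w.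
Definition angle w := RInt angle_density w_lo w.

Lemma is_derive_arclength w : w_range w -> is_derive arclength w (arc_density w).
Proof. apply is_derive_RInt_in_I; [apply arc_density_Ck | apply w_lo_hi_spec]. Qed.

Lemma is_derive_angle w : w_range w -> is_derive angle w (angle_density w).
Proof. apply is_derive_RInt_in_I; [apply angle_density_Ck | apply w_lo_hi_spec]. Qed.

Lemma arc_density_pos w : w_range w -> 0 < arc_density w.
Proof. intros Hw. apply Rinv_0_lt_compat, z_speed_pos, Hw. Qed.

Definition s_lo := arclength w_lo.
Definition s_hi := arclength w_hi.
Definition s_range := in_I (Finite s_lo) (Finite s_hi).

Definition z_of_s := inverse_on arclength w_lo w_hi.

Lemma s_lo_lt_s_hi : s_lo < s_hi.
Proof.
  destruct w_lo_hi_spec as [? [? ?]].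
  apply (increasing_in_I (Finite w_min) (Finite w_max) arclength arc_density);
    auto using is_derive_arclength, arc_density_pos.
Qed.

Lemma z_of_s_spec s : s_lo <= s <= s_hi -> w_lo <= z_of_s s <= w_hi /\ arclength (z_of_s s) = s.
Proof.
  destruct w_lo_hi_spec as [? [? ?]].
  apply (inverse_on_spec (Finite w_min) (Finite w_max) arclength arc_density);
    auto using is_derive_arclength.
Qed.

Lemma z_of_s_range s : s_range s -> w_range (z_of_s s).
Proof.
  intros [H1 H2]. simpl in *. destruct w_lo_hi_spec as [? [? ?]].
  apply (in_I_between (Finite w_min) (Finite w_max) w_lo w_hi); auto. apply z_of_s_spec. lra.
Qed.

Lemma is_derive_z_of_s s : s_range s -> is_derive z_of_s s (z_speed (z_of_s s)).
Proof.
  intros [H1 H2]. simpl in *. destruct w_lo_hi_spec as [? [? ?]].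
  unfold z_of_s. replace (z_speed _) with (/ arc_density (inverse_on arclength w_lo w_hi s)).
  - apply (is_derive_inverse_on (Finite w_min) (Finite w_max));
      auto using is_derive_arclength, arc_density_pos.
  - unfold arc_density. rewrite Rinv_inv. reflexivity.
Qed.

Lemma z_of_s_Ck n : Ck s_range n z_of_s.
Proof.
  induction n as [|n IH]; [apply Ck_0|].
  apply (Ck_S_of_is_derive _ n _ (fun s => z_speed (z_of_s s)) (open_in_I _ _)).
  - apply is_derive_z_of_s.
  - apply (Ck_comp _ w_range n z_speed z_of_s (open_in_I _ _) (open_in_I _ _)); auto.
    + apply z_speed_Ck.
    + apply z_of_s_range.
Qed.

Definition x_of_s s := sqrt (1 - z_of_s s ^ 2) * cos (angle (z_of_s s)).
Definition y_of_s s := sqrt (1 - z_of_s s ^ 2) * sin (angle (z_of_s s)).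

Lemma xy_of_s_Ck n : Ck s_range n x_of_s /\ Ck s_range n y_of_s.
Proof.
  assert (Ho : open s_range) by apply open_in_I.
  assert (HA : Ck s_range n (fun s => angle (z_of_s s))).
  { apply (Ck_comp _ w_range n angle z_of_s Ho (open_in_I _ _)); [|apply z_of_s_Ck | apply z_of_s_range].
    apply Ck_RInt; [apply angle_density_Ck | apply w_lo_hi_spec]. }
  assert (HR : Ck s_range n (fun s => sqrt (1 - z_of_s s ^ 2))).
  { apply Ck_sqrt_comp; auto; [apply Ck_minus, Ck_pow_comp, z_of_s_Ck; auto; apply Ck_const|].
    intros s Hs. pose proof (w_range_sq_lt_1 _ (z_of_s_range s Hs)). lra. }
  split; apply Ck_mult; auto; [apply Ck_cos_comp | apply Ck_sin_comp]; auto.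
Qed.

Lemma Derive_profile_of_s s : s_range s ->
  let w := z_of_s s in let Rw := sqrt (1 - w ^ 2) in let T := angle w in
  Derive z_of_s s = z_speed w /\
  Derive x_of_s s = - (w * z_speed w / Rw) * cos T + Rw * sin T * (Khc h c w / Rw ^ 2) /\
  Derive y_of_s s = - (w * z_speed w / Rw) * sin T - Rw * cos T * (Khc h c w / Rw ^ 2).
Proof.
  intros Hs w Rw T. pose proof (z_of_s_range s Hs) as Hw. fold w in Hw.
  pose proof (w_range_sq_lt_1 w Hw).
  assert (0 < Rw) by (apply sqrt_lt_R0; lra).
  assert (HR2 : Rw ^ 2 = 1 - w ^ 2) by (apply pow2_sqrt; lra).
  pose proof (z_speed_pos w Hw).
  pose proof (is_derive_z_of_s s Hs) as Dz. fold w in Dz.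
  pose proof (is_derive_angle w Hw) as DT.
  split; [|split]; apply is_derive_unique; auto; unfold x_of_s, y_of_s; auto_derive;
    try (repeat split; try (exists (z_speed w); exact Dz); try (exists (angle_density w); exact DT);
         fold w; lra);
    eta_reduce; rewrite (is_derive_unique _ _ _ Dz); fold w; rewrite (is_derive_unique _ _ _ DT);
    fold T; replace (sqrt (1 + - (w * (w * 1)))) with Rw by (unfold Rw; f_equal; ring);
    unfold angle_density; rewrite <- HR2; field; lra.
Qed.

Lemma profile_of_s_spec s : s_range s ->
  x_of_s s ^ 2 + y_of_s s ^ 2 + z_of_s s ^ 2 = 1 /\
  Derive x_of_s s ^ 2 + Derive y_of_s s ^ 2 + Derive z_of_s s ^ 2 = 1 /\
  ang_mom x_of_s y_of_s s = Khc h c (z_of_s s).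
Proof.
  intros Hs. destruct (Derive_profile_of_s s Hs) as [Dz [Dx Dy]]. cbv zeta in Dz, Dx, Dy.
  unfold ang_mom. rewrite Dz, Dx, Dy. unfold x_of_s, y_of_s.
  pose proof (z_of_s_range s Hs) as Hw. pose proof (z_speed_sq_pos _ Hw) as Hf.
  pose proof (w_range_sq_lt_1 _ Hw).
  set (w := z_of_s s) in *. clearbody w.
  assert (0 < sqrt (1 - w ^ 2)) by (apply sqrt_lt_R0; lra).
  assert (HR2 : sqrt (1 - w ^ 2) ^ 2 = 1 - w ^ 2) by (apply pow2_sqrt; lra).
  assert (HP2 : z_speed w ^ 2 = 1 - w ^ 2 - Khc h c w ^ 2) by (apply pow2_sqrt; lra).
  pose proof (sin2_cos2 (angle w)) as SC. unfold Rsqr in SC.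
  set (Rw := sqrt (1 - w ^ 2)) in *. set (T := angle w) in *. set (Kc := Khc h c w) in *.
  set (ph := z_speed w) in *. clearbody Rw T Kc ph.
  repeat split.
  - transitivity (Rw ^ 2 * (sin T * sin T + cos T * cos T) + w ^ 2); [ring|]. rewrite SC, HR2. ring.
  - transitivity ((w ^ 2 * ph ^ 2 + Kc ^ 2) / Rw ^ 2 * (sin T * sin T + cos T * cos T) + ph ^ 2);
      [field; lra|].
    rewrite SC, HP2, HR2. field. lra.
  - transitivity (Kc * (sin T * sin T + cos T * cos T)); [field; lra|]. rewrite SC. ring.
Qed.

Lemma profile_Khc_exists_pos : exists (a b : Rbar) (x y z : R -> R),
  profile_curve a b x y z /\ z_nonconstant a b z /\
  forall s, in_I a b s -> ang_mom x y s = Khc h c (z s).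
Proof.
  pose proof s_lo_lt_s_hi.
  exists (Finite s_lo), (Finite s_hi), x_of_s, y_of_s, z_of_s. split; [|split].
  - split; [simpl; lra|]. intros s Hs. destruct (profile_of_s_spec s Hs) as [M1 [M2 _]].
    repeat split; auto.
    + apply (proj1 (xy_of_s_Ck n) n (le_n n) s Hs).
    + apply (proj2 (xy_of_s_Ck n) n (le_n n) s Hs).
    + apply (z_of_s_Ck n n (le_n n) s Hs).
    + apply (w_range_spec _ (z_of_s_range s Hs)).
  - exists ((2 * s_lo + s_hi) / 3), ((s_lo + 2 * s_hi) / 3).
    repeat split; simpl; try lra. intro E.
    destruct (z_of_s_spec ((2 * s_lo + s_hi) / 3)) as [_ E1]; [lra|].
    destruct (z_of_s_spec ((s_lo + 2 * s_hi) / 3)) as [_ E2]; [lra|].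
    rewrite E in E1. lra.
  - intros s Hs. apply (profile_of_s_spec s Hs).
Qed.

End Existence.

Lemma great_circle_profile (h : R) : exists (a b : Rbar) (x y z : R -> R),
  profile_curve a b x y z /\ z_nonconstant a b z /\
  forall s, in_I a b s -> ang_mom x y s = Khc h 0 (z s).
Proof.
  exists (Finite (- (PI / 2))), (Finite (PI / 2)), sin, (fun _ => 0), cos.
  pose proof PI_RGT_0.
  assert (Dsin : forall s, Derive sin s = cos s)
    by (intros; apply is_derive_unique; auto_derive; auto; ring).
  assert (Dcos : forall s, Derive cos s = - sin s)
    by (intros; apply is_derive_unique; auto_derive; auto; ring).
  split; [|split].
  - split; [simpl; lra|]. intros s [H1 H2]. simpl in H1, H2.
    pose proof (sin2_cos2 s) as E. unfold Rsqr in E.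
    repeat split.
    + apply (proj2 (Ck_cos_sin n) n (le_n n) s I).
    + apply ex_derive_n_const.
    + apply (proj1 (Ck_cos_sin n) n (le_n n) s I).
    + nra.
    + apply cos_gt_0; lra.
    + rewrite Dsin, Dcos, Derive_const. nra.
  - exists 0, (PI / 3). repeat split; simpl; try lra. rewrite cos_0, cos_PI3. lra.
  - intros s _. unfold ang_mom. rewrite Derive_const, Khc_0. ring.
Qed.

Theorem profile_Khc_exists (h c : R) : 0 <= c < 1/2 ->
  exists (a b : Rbar) (x y z : R -> R),
    profile_curve a b x y z /\ z_nonconstant a b z /\
    forall s, in_I a b s -> ang_mom x y s = Khc h c (z s).
Proof.
  intros Hc. destruct (Req_dec c 0) as [->|Hc0].
  - apply great_circle_profile.
  - apply profile_Khc_exists_pos. lra.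
Qed.

Theorem corollary5p1 (h : R) (hh : 0 <= h) :
  (* (1) classification: a helicoidal surface of pitch h whose profile curve has
     non-constant z is minimal iff its angular momentum is +-K^h_c(z), 0 <= c < 1/2
     (the sign depending on orientation) *)
  (forall (a b : Rbar) (x y z : R -> R),
     profile_curve a b x y z -> z_nonconstant a b z ->
     (minimal_in_S3 (strip a b) (helicoidal h x y z) <->
      exists c eps : R, 0 <= c < 1/2 /\ (eps = 1 \/ eps = -1) /\
        forall s, in_I a b s -> ang_mom x y s = eps * Khc h c (z s))) /\
  (* (2) every member of the family exists *)
  (forall c : R, 0 <= c < 1/2 ->
     exists (a b : Rbar) (x y z : R -> R),
       profile_curve a b x y z /\ z_nonconstant a b z /\
       forall s, in_I a b s -> ang_mom x y s = Khc h c (z s)) /\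
  (* (3) the profile curve is determined by K^h_c up to rotations of the
     (x1,x2)-plane (translations along c_0), once the parametrization is
     normalised by the initial values of z and z' *)
  (forall (c : R) (a b : Rbar) (x1 y1 z1 x2 y2 z2 : R -> R),
     0 <= c < 1/2 ->
     profile_curve a b x1 y1 z1 -> profile_curve a b x2 y2 z2 ->
     z_nonconstant a b z1 -> z_nonconstant a b z2 ->
     (forall s, in_I a b s -> ang_mom x1 y1 s = Khc h c (z1 s)) ->
     (forall s, in_I a b s -> ang_mom x2 y2 s = Khc h c (z2 s)) ->
     (exists s0, in_I a b s0 /\ z1 s0 = z2 s0 /\ Derive z1 s0 = Derive z2 s0) ->
     exists alpha : R, forall s, in_I a b s ->
       x2 s = x1 s * cos alpha - y1 s * sin alpha /\
       y2 s = x1 s * sin alpha + y1 s * cos alpha /\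
       z2 s = z1 s).
Proof.
  split; [|split].
  - intros a b x y z. apply helicoidal_minimal_iff_ang_mom.
  - intros c. apply profile_Khc_exists.
  - intros c a b x1 y1 z1 x2 y2 z2. apply profile_Khc_unique.
Qed.
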